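(* Let $(W,\lambda\colon N\otimes W\to W)$ be an initial algebra of $N\otimes-$ on $\mathsf{SquaMS}$ (so $\lambda$ is an isomorphism), let $V=C(W)$ be its Cauchy completion, and let $\theta\colon N\otimes V\to V$ be the composite of the canonical isometric isomorphism $N\otimes C(W)\cong C(N\otimes W)$ (sending $n\otimes(x_k)_k$ to $(n\otimes x_k)_k$) with $C(\lambda)$. Then $(V,\theta^{-1}\colon V\to N\otimes V)$ is the final $N\otimes-$ coalgebra.
   Context: Let $M_0=\{(r,s)\in[0,1]^2: r\in\{0,1\}\text{ or } s\in\{0,1\}\}$. A square metric space is a pair $(X,S_X)$ with $X$ a metric space with all distances at most $2$ and $S_X\colon M_0\to X$ injective such that (sq1) for $i\in\{0,1\}$, $r,s\in[0,1]$: $d_X(S_X(i,r),S_X(i,s))=|s-r|$ and $d_X(S_X(r,i),S_X(s,i))=|s-r|$; (sq2) $d_X(S_X(r,s),S_X(t,u))\ge|r-t|+|s-u|$. $\mathsf{SquaMS}$: these objects, with short maps $f$ satisfying $f\circ S_X=S_Y$ as morphisms. Let $N=\{0,1,2\}^2$, also viewed as points of $\mathbb{R}^2$. For $X$ in $\mathsf{SquaMS}$, $N\otimes X=(N\times X)/\!\sim$, where $\sim$ is generated by $(m,S_X(p))\sim(n,S_X(q))$ whenever $m,n\in N$ differ by exactly $1$ in exactly one coordinate and $(m+p)/3=(n+q)/3$; $n\otimes x$ is the class of $(n,x)$. With $d((a,u),(b,v))=\frac13 d_X(u,v)$ if $a=b$ and $2$ otherwise, $N\otimes X$ gets the quotient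 metric (infimum over finite chains of sums of consecutive distances, $\sim$-related pairs counting $0$). $S_{N\otimes X}(p)=n\otimes S_X(3p-n)$ for any $n\in N$ with $p\in(n+[0,1]^2)/3$; $(N\otimes f)(n\otimes x)=n\otimes f(x)$. The Cauchy completion $C(X)$ has metric $d((x_i),(y_i))=\lim d_X(x_i,y_i)$ and $S_{C(X)}(p)$ the class of the constant sequence $S_X(p)$. A final coalgebra admits a unique coalgebra morphism from every coalgebra. *)

From Stdlib Require Import Reals Lra List Relations ClassicalEpsilon.
From Coquelicot Require Import Coquelicot.
Open Scope R_scope.

Definition eqcl {T : Type} (Rel : T -> T -> Prop) : T -> T -> Prop :=
  clos_refl_sym_trans T Rel.

Definition quot (T : Type) (Rel : T -> T -> Prop) : Type :=
  {P : T -> Prop | exists x, P = eqcl Rel x}.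

Definition cls {T : Type} (Rel : T -> T -> Prop) (x : T) : quot T Rel :=
  exist _ (eqcl Rel x) (ex_intro _ x eq_refl).

Definition rep {T : Type} {Rel : T -> T -> Prop} (q : quot T Rel) : T :=
  proj1_sig (constructive_indefinite_description _ (proj2_sig q)).

Definition inM0 (r s : R) : Prop :=
  0 <= r <= 1 /\ 0 <= s <= 1 /\ (r = 0 \/ r = 1 \/ s = 0 \/ s = 1).

(* S_X is represented as a total function R -> R -> X; only its values on
   M0 are ever constrained or used. *)
Record SqRaw := { car : Type; dist : car -> car -> R; sq : R -> R -> car }.

Record isSquaMS (X : SqRaw) : Prop := {
  sq_zero : forall x y, dist X x y = 0 <-> x = y;
  sq_sym : forall x y, dist X x y = dist X y x;
  sq_tri : forall x y z, dist X x z <= dist X x y + dist X y z;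
  sq_bound : forall x y, dist X x y <= 2;
  sq_inj : forall r s r' s', inM0 r s -> inM0 r' s' ->
             sq X r s = sq X r' s' -> r = r' /\ s = s';
  sq1 : forall i r s, (i = 0 \/ i = 1) -> 0 <= r <= 1 -> 0 <= s <= 1 ->
          dist X (sq X i r) (sq X i s) = Rabs (s - r) /\
          dist X (sq X r i) (sq X s i) = Rabs (s - r);
  sq2 : forall r s t u, inM0 r s -> inM0 t u ->
          dist X (sq X r s) (sq X t u) >= Rabs (r - t) + Rabs (s - u)
}.

Definition is_morph (X Y : SqRaw) (f : car X -> car Y) : Prop :=
  (forall x y, dist Y (f x) (f y) <= dist X x y) /\
  (forall r s, inM0 r s -> f (sq X r s) = sq Y r s).

Inductive three := I0 | I1 | I2.
Definition N := (three * three)%type.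
Definition toR (t : three) : R := match t with I0 => 0 | I1 => 1 | I2 => 2 end.
Definition N_eq_dec (m n : N) : {m = n} + {m <> n}.
Proof. decide equality; decide equality. Defined.

Definition adjacent (m n : N) : Prop :=
  (toR (fst m) = toR (fst n) /\ Rabs (toR (snd m) - toR (snd n)) = 1) \/
  (toR (snd m) = toR (snd n) /\ Rabs (toR (fst m) - toR (fst n)) = 1).

Definition Npre (X : SqRaw) : Type := (N * car X)%type.

Definition gen (X : SqRaw) (a b : Npre X) : Prop :=
  exists (m n : N) (r s r' s' : R),
    inM0 r s /\ inM0 r' s' /\ adjacent m n /\
    (toR (fst m) + r) / 3 = (toR (fst n) + r') / 3 /\
    (toR (snd m) + s) / 3 = (toR (snd n) + s') / 3 /\
    a = (m, sq X r s) /\ b = (n, sq X r' s').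

Definition d0 (X : SqRaw) (a b : Npre X) : R :=
  if N_eq_dec (fst a) (fst b) then dist X (snd a) (snd b) / 3 else 2.

(* chains x ~ a1, (a1 -> b1), b1 ~ a2, ..., bk ~ y ; ~-steps cost 0 *)
Fixpoint chain_ok (X : SqRaw) (x y : Npre X) (l : list (Npre X * Npre X)) : Prop :=
  match l with
  | nil => eqcl (gen X) x y
  | (a, b) :: l' => eqcl (gen X) x a /\ chain_ok X b y l'
  end.

Fixpoint chain_cost (X : SqRaw) (l : list (Npre X * Npre X)) : R :=
  match l with
  | nil => 0
  | (a, b) :: l' => d0 X a b + chain_cost X l'
  end.

Definition qdist (X : SqRaw) (x y : Npre X) : R :=
  real (Glb_Rbar (fun c => exists l, chain_ok X x y l /\ c = chain_cost X l)).

Definition ncoord (r : R) : three :=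
  if Rlt_dec r (1/3) then I0 else if Rlt_dec r (2/3) then I1 else I2.

Definition Ntens (X : SqRaw) : SqRaw :=
  {| car := quot (Npre X) (gen X);
     dist := fun p q => qdist X (rep p) (rep q);
     sq := fun r s =>
       let n := (ncoord r, ncoord s) in
       cls (gen X) (n, sq X (3 * r - toR (fst n)) (3 * s - toR (snd n))) |}.

Definition Ntens_map (X Y : SqRaw) (f : car X -> car Y)
  (c : car (Ntens X)) : car (Ntens Y) :=
  cls (gen Y) (fst (rep c), f (snd (rep c))).

Definition cauchy {T : Type} (d : T -> T -> R) (u : nat -> T) : Prop :=
  forall eps, 0 < eps -> exists M : nat, forall m n : nat,
    (M <= m)%nat -> (M <= n)%nat -> d (u m) (u n) < eps.

Definition CS (X : SqRaw) : Type := {u : nat -> car X | cauchy (dist X) u}.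

Definition crel (X : SqRaw) (u v : CS X) : Prop :=
  is_lim_seq (fun i => dist X (proj1_sig u i) (proj1_sig v i)) 0.

Definition Ccar (X : SqRaw) : Type := quot (CS X) (crel X).

Lemma const_cauchy (X : SqRaw) (HX : isSquaMS X) (x : car X) :
  cauchy (dist X) (fun _ => x).
Proof.
  intros eps Heps. exists 0%nat. intros m n _ _.
  rewrite (proj2 (sq_zero X HX x x) eq_refl). exact Heps.
Qed.

Definition Compl (X : SqRaw) (HX : isSquaMS X) : SqRaw :=
  {| car := Ccar X;
     dist := fun a b =>
       real (Lim_seq (fun i => dist X (proj1_sig (rep a) i) (proj1_sig (rep b) i)));
     sq := fun r s =>
       cls (crel X) (exist _ (fun _ => sq X r s) (const_cauchy X HX (sq X r s))) |}.

(* class of a sequence (junk default if not Cauchy; never used on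
   non-Cauchy sequences in the statement's intended reading) *)
Definition mkC (X : SqRaw) (HX : isSquaMS X) (u : nat -> car X) : Ccar X :=
  match excluded_middle_informative (cauchy (dist X) u) with
  | left H => cls (crel X) (exist _ u H)
  | right _ => cls (crel X) (exist _ (fun _ => sq X 0 0) (const_cauchy X HX (sq X 0 0)))
  end.

(* theta = C(lambda) o (N (x) C(W) ~= C(N (x) W)):
   n (x) [(x_k)_k]  |->  [(lambda (n (x) x_k))_k] *)
Definition theta (W : SqRaw) (HW : isSquaMS W) (lam : car (Ntens W) -> car W)
  (c : car (Ntens (Compl W HW))) : car (Compl W HW) :=
  let n := fst (rep c) in
  let xs : Ccar W := snd (rep c) in
  mkC W HW (fun k => lam (cls (gen W) (n, proj1_sig (rep xs) k))).

(* Lambek's lemma makes [lam] an isomorphism of square metric spaces, hence an isometry, and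
   then [theta] is an isometry too.  It is onto because N (x) - preserves completeness (a Cauchy
   sequence eventually stays in one cell, and either stays off the boundary of that cell or
   approaches it), so [theta] has an inverse that is a coalgebra structure on V = C(W).
   For a coalgebra [gam : Y -> N (x) Y], coalgebra morphisms into V are exactly the fixed points
   of [h |-> theta o (N (x) h) o gam], which contracts sup-distances by 1/3 since N (x) - divides
   distances inside a cell by 3.  This gives uniqueness, and existence follows by iterating from
   one morphism Y -> V, which exists because Y retracts onto the unit square through the
   coordinates given by (sq2) and [lam] yields a short map from the unit square into V. *)

From Stdlib Require Import Reals Lra Lia List Relations ClassicalEpsilon Classical
  ProofIrrelevance FunctionalExtensionality PropExtensionality.
From Coquelicot Require Import Coquelicot.
Open Scope R_scope.

Ltac lra_abs := unfold Rabs in *; repeat destruct Rcase_abs; lra.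

Ltac solve_M0 :=
  first [left; lra | right; left; lra | right; right; left; lra | right; right; right; lra].

Section Quotient.
Context {T : Type} (Rel : T -> T -> Prop).

Lemma cls_eq x y : eqcl Rel x y -> cls Rel x = cls Rel y.
Proof.
  intro Hxy. apply eq_sig_hprop; [intros; apply proof_irrelevance|]; simpl.
  apply functional_extensionality; intro z; apply propositional_extensionality.
  split; intro H.
  - apply rst_trans with x; [apply rst_sym|]; assumption.
  - apply rst_trans with y; assumption.
Qed.

Lemma cls_inj x y : cls Rel x = cls Rel y -> eqcl Rel x y.
Proof.
  intro H. assert (Hcl : eqcl Rel x = eqcl Rel y) by exact (f_equal (@proj1_sig _ _) H).
  rewrite Hcl. apply rst_refl.
Qed.

Lemma cls_rep (q : quot T Rel) : cls Rel (rep q) = q.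
Proof.
  apply eq_sig_hprop; [intros; apply proof_irrelevance|]; simpl.
  unfold rep. destruct (constructive_indefinite_description _ _) as [x Hx]. auto.
Qed.

Lemma rep_cls x : eqcl Rel (rep (cls Rel x)) x.
Proof. apply cls_inj. rewrite cls_rep. reflexivity. Qed.

End Quotient.

Definition infR (E : R -> Prop) : R := real (Glb_Rbar E).

Section Infimum.
Variables (E : R -> Prop) (B : R).
Hypotheses (E_inhabited : exists x, E x) (E_bounded : forall y, E y -> B <= y).

Lemma infR_finite : Glb_Rbar E = Finite (infR E).
Proof.
  destruct E_inhabited as [x Ex]. unfold infR. destruct (Glb_Rbar_correct E) as [Hlb Hglb].
  assert (H1 : Rbar_le (Glb_Rbar E) x) by (apply Hlb; exact Ex).
  assert (H2 : Rbar_le B (Glb_Rbar E)) by (apply Hglb; intros y Ey; apply E_bounded; exact Ey).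
  destruct (Glb_Rbar E); simpl in *; tauto.
Qed.

Lemma infR_le x : E x -> infR E <= x.
Proof.
  intro Ex. destruct (Glb_Rbar_correct E) as [Hlb _].
  pose proof (Hlb x Ex) as H. rewrite infR_finite in H. exact H.
Qed.

Lemma infR_ge m : (forall y, E y -> m <= y) -> m <= infR E.
Proof.
  intro Hm. destruct (Glb_Rbar_correct E) as [_ Hglb].
  pose proof (Hglb m Hm) as H. rewrite infR_finite in H. exact H.
Qed.

Lemma infR_approx eps : 0 < eps -> exists y, E y /\ y < infR E + eps.
Proof.
  intro Heps. apply NNPP. intro Hn.
  assert (Hge : infR E + eps <= infR E).
  { apply infR_ge. intros y Ey. apply Rnot_lt_le. intro Hy. apply Hn. exists y. auto. }
  lra.
Qed.

End Infimum.

Definition third_pow (k : nat) : R := (/ 3) ^ k.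

Lemma third_pow_pos k : 0 < third_pow k.
Proof. apply pow_lt. lra. Qed.

Lemma third_pow_S k : third_pow (S k) = third_pow k / 3.
Proof. unfold third_pow. simpl. lra. Qed.

Lemma third_pow_0 : third_pow 0 = 1.
Proof. reflexivity. Qed.

Lemma third_pow_small eps : 0 < eps -> exists K, forall k, (K <= k)%nat -> third_pow k < eps.
Proof.
  intro Heps. destruct (pow_lt_1_zero (/3) ltac:(rewrite Rabs_pos_eq; lra) eps Heps) as [K HK].
  exists K. intros k Hk. specialize (HK k Hk). rewrite Rabs_pos_eq in HK; [exact HK|].
  apply pow_le. lra.
Qed.

Lemma third_pow_le k m : (k <= m)%nat -> third_pow m <= third_pow k.
Proof. induction 1; [lra|]. rewrite third_pow_S. pose proof (third_pow_pos m). lra. Qed.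

Lemma third_pow_small_scaled C eps : 0 < eps ->
  exists K, forall k, (K <= k)%nat -> C * third_pow k < eps.
Proof.
  intro Heps. destruct (Rle_dec C 0).
  - exists 0%nat. intros k _. pose proof (third_pow_pos k). nra.
  - destruct (third_pow_small (eps / C)) as [K HK]; [apply Rdiv_lt_0_compat; lra|].
    exists K. intros k Hk. specialize (HK k Hk).
    apply (Rmult_lt_compat_l C) in HK; [|lra]. field_simplify in HK; lra.
Qed.

Lemma le0_of_le_third_pow x C : (forall k, x <= C * third_pow k) -> x <= 0.
Proof.
  intro H. apply Rle_plus_epsilon. intros eps Heps.
  destruct (third_pow_small_scaled C eps Heps) as [K HK].
  specialize (H K). specialize (HK K (le_n K)). lra.
Qed.

Definition converges_to {T : Type} (D : T -> T -> R) (u : nat -> T) (l : T) : Prop :=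
  forall eps, 0 < eps -> exists N, forall k, (N <= k)%nat -> D (u k) l < eps.

Section Distance.
Context {T : Type} (D : T -> T -> R)
  (D_sym : forall x y, D x y = D y x) (D_tri : forall x y z, D x z <= D x y + D y z).

Lemma cauchy_of_geometric_rate (u : nat -> T) C :
  (forall k m, (k <= m)%nat -> D (u k) (u m) <= C * third_pow k) -> cauchy D u.
Proof.
  intros Hu eps Heps. destruct (third_pow_small_scaled C eps Heps) as [K HK].
  exists K. intros m n Hm Hn. destruct (Nat.le_ge_cases m n) as [Hmn|Hmn].
  - specialize (Hu m n Hmn). specialize (HK m Hm). lra.
  - specialize (Hu n m Hmn). rewrite D_sym in Hu. specialize (HK n Hn). lra.
Qed.

Lemma converges_to_rate_le (u : nat -> T) (e : nat -> R) l :
  (forall k m, (k <= m)%nat -> D (u k) (u m) <= e k) -> converges_to D u l ->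
  forall k, D (u k) l <= e k.
Proof.
  intros He Hl k. apply Rle_plus_epsilon. intros eps Heps.
  destruct (Hl eps Heps) as [N HN].
  pose proof (D_tri (u k) (u (max k N)) l). pose proof (He k (max k N) ltac:(lia)).
  pose proof (HN (max k N) ltac:(lia)). lra.
Qed.

Lemma cauchy_subseq_converges (u : nat -> T) (s : nat -> nat) l :
  cauchy D u -> (forall j, (j <= s j)%nat) -> converges_to D (fun j => u (s j)) l ->
  converges_to D u l.
Proof.
  intros Hu Hs Hl eps Heps.
  destruct (Hu (eps / 2) ltac:(lra)) as [K HK]. destruct (Hl (eps / 2) ltac:(lra)) as [J HJ].
  exists (max K J). intros k Hk.
  pose proof (D_tri (u k) (u (s (max K J))) l). pose proof (HJ (max K J) ltac:(lia)).
  assert (D (u k) (u (s (max K J))) < eps / 2).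
  { apply HK; [lia|]. specialize (Hs (max K J)). lia. }
  lra.
Qed.

End Distance.

Definition complete (X : SqRaw) : Prop :=
  forall u : nat -> car X, cauchy (dist X) u -> exists l, converges_to (dist X) u l.

Lemma morph_id (X : SqRaw) : is_morph X X (fun x => x).
Proof. split; intros; [lra | reflexivity]. Qed.

Lemma morph_comp (X Y Z : SqRaw) f g :
  is_morph X Y f -> is_morph Y Z g -> is_morph X Z (fun x => g (f x)).
Proof.
  intros [Hf1 Hf2] [Hg1 Hg2]. split.
  - intros x y. specialize (Hf1 x y). specialize (Hg1 (f x) (f y)). lra.
  - intros r s H. rewrite Hf2, Hg2; auto.
Qed.

(** * The quotient metric on N (x) X *)

Section SquareMetric.
Context (X : SqRaw) (HX : isSquaMS X).
Notation d := (dist X).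

Lemma dist_refl x : d x x = 0.
Proof. apply (sq_zero X HX). reflexivity. Qed.

Lemma dist_nonneg x y : 0 <= d x y.
Proof.
  pose proof (sq_tri X HX x y x). rewrite dist_refl, (sq_sym X HX y x) in H. lra.
Qed.

Lemma d0_nonneg a b : 0 <= d0 X a b.
Proof. unfold d0. destruct N_eq_dec; [pose proof (dist_nonneg (snd a) (snd b))|]; lra. Qed.

Lemma d0_sym a b : d0 X a b = d0 X b a.
Proof.
  unfold d0. destruct (N_eq_dec (fst a) (fst b)), (N_eq_dec (fst b) (fst a)); try congruence.
  rewrite (sq_sym X HX). reflexivity.
Qed.

Lemma d0_le_2 a b : d0 X a b <= 2.
Proof.
  unfold d0. destruct N_eq_dec; [|lra].
  pose proof (sq_bound X HX (snd a) (snd b)). pose proof (dist_nonneg (snd a) (snd b)). lra.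
Qed.

Lemma d0_same_cell n x y : d0 X (n, x) (n, y) = d x y / 3.
Proof. unfold d0. simpl. destruct N_eq_dec; [reflexivity | congruence]. Qed.

Notation E := (eqcl (gen X)).

Lemma chain_cost_nonneg l : 0 <= chain_cost X l.
Proof. induction l as [|[a b] l IH]; simpl; [|pose proof (d0_nonneg a b)]; lra. Qed.

Lemma chain_ok_app x y z l1 l2 :
  chain_ok X x y l1 -> chain_ok X y z l2 -> chain_ok X x z (l1 ++ l2).
Proof.
  revert x. induction l1 as [|[a b] l1 IH]; simpl; intros x.
  - intros Hxy Hl2. destruct l2 as [|[a b] l2]; simpl in *.
    + apply rst_trans with y; assumption.
    + destruct Hl2 as [Hya Hl2]. split; [apply rst_trans with y|]; assumption.
  - intros [Hxa Hl1] Hl2. split; [exact Hxa | eapply IH; eassumption].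
Qed.

Lemma chain_cost_app l1 l2 : chain_cost X (l1 ++ l2) = chain_cost X l1 + chain_cost X l2.
Proof. induction l1 as [|[a b] l1 IH]; simpl; [|rewrite IH]; lra. Qed.

Definition chain_rev (l : list (Npre X * Npre X)) : list (Npre X * Npre X) :=
  rev (map (fun p => (snd p, fst p)) l).

Lemma chain_ok_rev x y l : chain_ok X x y l -> chain_ok X y x (chain_rev l).
Proof.
  unfold chain_rev. revert x. induction l as [|[a b] l IH]; simpl; intros x.
  - apply rst_sym.
  - intros [Hxa Hl]. apply chain_ok_app with b; [exact (IH b Hl)|].
    simpl. split; [apply rst_refl | apply rst_sym; exact Hxa].
Qed.

Lemma chain_cost_rev l : chain_cost X (chain_rev l) = chain_cost X l.
Proof.
  unfold chain_rev. induction l as [|[a b] l IH]; simpl; [reflexivity|].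
  rewrite chain_cost_app, IH. simpl. rewrite d0_sym. lra.
Qed.

Notation qd := (qdist X).

Lemma chain_costs_inhabited x y :
  exists c, exists l, chain_ok X x y l /\ c = chain_cost X l.
Proof.
  exists (d0 X x y + 0), ((x, y) :: nil). simpl. split; [split; apply rst_refl | reflexivity].
Qed.

Lemma chain_costs_nonneg x y c :
  (exists l, chain_ok X x y l /\ c = chain_cost X l) -> 0 <= c.
Proof. intros [l [_ ->]]. apply chain_cost_nonneg. Qed.

Lemma qdist_le_cost x y l : chain_ok X x y l -> qd x y <= chain_cost X l.
Proof.
  intro Hl. apply (infR_le _ 0); [apply chain_costs_inhabited | apply chain_costs_nonneg |].
  exists l. auto.
Qed.

Lemma qdist_ge x y m : (forall l, chain_ok X x y l -> m <= chain_cost X l) -> m <= qd x y.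
Proof.
  intro Hm. apply (infR_ge _ 0); [apply chain_costs_inhabited | apply chain_costs_nonneg |].
  intros c [l [Hl ->]]. auto.
Qed.

Lemma qdist_approx x y eps :
  0 < eps -> exists l, chain_ok X x y l /\ chain_cost X l < qd x y + eps.
Proof.
  intro Heps.
  destruct (infR_approx _ 0 (chain_costs_inhabited x y) (chain_costs_nonneg x y) eps Heps)
    as [c [[l [Hl ->]] Hc]].
  exists l. auto.
Qed.

Lemma qdist_nonneg x y : 0 <= qd x y.
Proof. apply qdist_ge. intros. apply chain_cost_nonneg. Qed.

Lemma qdist_le_d0 a b : qd a b <= d0 X a b.
Proof.
  pose proof (qdist_le_cost a b ((a, b) :: nil)) as H. simpl in H.
  assert (Hc : E a a /\ E b b) by (split; apply rst_refl). specialize (H Hc). lra.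
Qed.

Lemma qdist_same_cell n x y : qd (n, x) (n, y) <= d x y / 3.
Proof. rewrite <- (d0_same_cell n). apply qdist_le_d0. Qed.

Lemma qdist_le_2 a b : qd a b <= 2.
Proof. pose proof (qdist_le_d0 a b). pose proof (d0_le_2 a b). lra. Qed.

Lemma qdist_eqcl a b : E a b -> qd a b = 0.
Proof.
  intro H. pose proof (qdist_le_cost a b nil H). simpl in *. pose proof (qdist_nonneg a b). lra.
Qed.

Lemma qdist_sym a b : qd a b = qd b a.
Proof.
  assert (Hle : forall x y, qd x y <= qd y x).
  { intros x y. apply qdist_ge. intros l Hl. rewrite <- chain_cost_rev.
    apply qdist_le_cost, chain_ok_rev, Hl. }
  apply Rle_antisym; auto.
Qed.

Lemma qdist_tri a b c : qd a c <= qd a b + qd b c.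
Proof.
  apply Rle_plus_epsilon. intros eps Heps.
  destruct (qdist_approx a b (eps / 2)) as [l1 [H1 C1]]; [lra|].
  destruct (qdist_approx b c (eps / 2)) as [l2 [H2 C2]]; [lra|].
  pose proof (qdist_le_cost a c _ (chain_ok_app _ _ _ _ _ H1 H2)) as Hac.
  rewrite chain_cost_app in Hac. lra.
Qed.

Lemma qdist_eqcl_l a a' b : E a a' -> qd a b = qd a' b.
Proof.
  intro H. pose proof (qdist_tri a a' b) as H1. pose proof (qdist_tri a' a b) as H2.
  rewrite (qdist_eqcl _ _ H) in H1. rewrite (qdist_eqcl _ _ (rst_sym _ _ _ _ H)) in H2. lra.
Qed.

Lemma qdist_eqcl_r a b b' : E b b' -> qd a b = qd a b'.
Proof. intro H. rewrite (qdist_sym a b), (qdist_sym a b'). apply qdist_eqcl_l, H. Qed.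

(* The source of all lower bounds on [qdist]. *)
Lemma qdist_ge_potential (phi : Npre X -> R) :
  (forall a b, gen X a b -> phi a = phi b) ->
  (forall a b, Rabs (phi b - phi a) <= d0 X a b) ->
  forall x y, Rabs (phi y - phi x) <= qd x y.
Proof.
  intros Hgen Hlip.
  assert (Heq : forall a b, E a b -> phi a = phi b).
  { intros a b H. induction H; auto. congruence. }
  assert (Hone : forall x y, phi y - phi x <= qd x y).
  { intros x y. apply qdist_ge. intro l. revert x.
    induction l as [|[a b] l IH]; simpl; intros x.
    - intro H. rewrite (Heq _ _ H). lra.
    - intros [Hxa Hl]. specialize (IH b Hl). specialize (Hlip a b).
      rewrite (Heq _ _ Hxa). apply Rabs_le_between in Hlip. lra. }
  intros x y. apply Rabs_le. pose proof (Hone x y). pose proof (Hone y x) as Hyx.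
  rewrite qdist_sym in Hyx. lra.
Qed.

Lemma Ntens_dist_cls a b : dist (Ntens X) (cls (gen X) a) (cls (gen X) b) = qd a b.
Proof.
  simpl. rewrite (qdist_eqcl_l _ a), (qdist_eqcl_r _ _ b); try apply rep_cls. reflexivity.
Qed.

End SquareMetric.

Lemma ncoord_range r : 0 <= r <= 1 -> 0 <= 3 * r - toR (ncoord r) <= 1.
Proof. intro H. unfold ncoord. repeat destruct Rlt_dec; simpl; lra. Qed.

Lemma ncoord_0 : ncoord 0 = I0.
Proof. unfold ncoord. destruct Rlt_dec; [reflexivity | lra]. Qed.

Lemma ncoord_1 : ncoord 1 = I2.
Proof. unfold ncoord. repeat destruct Rlt_dec; try lra; reflexivity. Qed.

Lemma ncoord_M0 r s : inM0 r s -> inM0 (3 * r - toR (ncoord r)) (3 * s - toR (ncoord s)).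
Proof.
  intros (Hr & Hs & Hside). split; [apply ncoord_range; auto|]. split; [apply ncoord_range; auto|].
  destruct Hside as [-> | [-> | [-> | ->]]]; rewrite ?ncoord_0, ?ncoord_1; simpl; solve_M0.
Qed.

Section NtensMap.
Context (X Y : SqRaw) (HX : isSquaMS X) (HY : isSquaMS Y).

Definition Npre_map (f : car X -> car Y) (a : Npre X) : Npre Y := (fst a, f (snd a)).

Context (f : car X -> car Y) (Hf : is_morph X Y f).

Lemma gen_map a b : gen X a b -> gen Y (Npre_map f a) (Npre_map f b).
Proof.
  intros (m & n & r & s & r' & s' & H1 & H2 & H3 & H4 & H5 & -> & ->).
  exists m, n, r, s, r', s'. unfold Npre_map; simpl.
  rewrite (proj2 Hf r s H1), (proj2 Hf r' s' H2). tauto.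
Qed.

Lemma eqcl_gen_map a b : eqcl (gen X) a b -> eqcl (gen Y) (Npre_map f a) (Npre_map f b).
Proof.
  induction 1 as [a b Hab | a | a b _ IH | a b c _ IH1 _ IH2].
  - apply rst_step, gen_map, Hab.
  - apply rst_refl.
  - apply rst_sym, IH.
  - eapply rst_trans; eassumption.
Qed.

Lemma qdist_map a b : qdist Y (Npre_map f a) (Npre_map f b) <= qdist X a b.
Proof.
  set (F := fun p : Npre X * Npre X => (Npre_map f (fst p), Npre_map f (snd p))).
  apply (qdist_ge X HX). intros l Hl.
  assert (Hmap : forall x, chain_ok X x b l ->
    chain_ok Y (Npre_map f x) (Npre_map f b) (map F l) /\ chain_cost Y (map F l) <= chain_cost X l).
  { clear Hl. induction l as [|[u v] l IH]; simpl; intros x Hx.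
    - split; [apply eqcl_gen_map; auto | lra].
    - destruct Hx as [Hxu Hl]. destruct (IH v Hl) as [IH1 IH2].
      split; [split; [apply eqcl_gen_map|]; auto|].
      assert (d0 Y (Npre_map f u) (Npre_map f v) <= d0 X u v).
      { unfold d0, Npre_map; simpl. destruct N_eq_dec; [|lra].
        pose proof (proj1 Hf (snd u) (snd v)). lra. }
      lra. }
  destruct (Hmap a Hl) as [H1 H2]. pose proof (qdist_le_cost Y HY _ _ _ H1). lra.
Qed.

Lemma Ntens_map_cls a : Ntens_map X Y f (cls (gen X) a) = cls (gen Y) (Npre_map f a).
Proof. apply cls_eq, (eqcl_gen_map (rep (cls (gen X) a)) a), rep_cls. Qed.

Lemma Ntens_map_morph : is_morph (Ntens X) (Ntens Y) (Ntens_map X Y f).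
Proof.
  split.
  - intros c c'. rewrite <- (cls_rep _ c), <- (cls_rep _ c'), !Ntens_map_cls.
    rewrite !Ntens_dist_cls; auto. apply qdist_map.
  - intros r s H. simpl. rewrite Ntens_map_cls. unfold Npre_map; simpl.
    rewrite (proj2 Hf); [reflexivity | apply ncoord_M0, H].
Qed.

End NtensMap.

Lemma Ntens_map_contract (X Y : SqRaw) (HY : isSquaMS Y) (h h' : car X -> car Y) c :
  dist (Ntens Y) (Ntens_map X Y h c) (Ntens_map X Y h' c) <=
  dist Y (h (snd (rep c))) (h' (snd (rep c))) / 3.
Proof. unfold Ntens_map. rewrite Ntens_dist_cls by auto. apply qdist_same_cell; auto. Qed.

Lemma Ntens_map_comp (X Y Z : SqRaw) (f : car X -> car Y) (g : car Y -> car Z)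
  (Hf : is_morph X Y f) (Hg : is_morph Y Z g) c :
  Ntens_map X Z (fun x => g (f x)) c = Ntens_map Y Z g (Ntens_map X Y f c).
Proof.
  rewrite <- (cls_rep _ c), (Ntens_map_cls X Z _ (morph_comp X Y Z f g Hf Hg)).
  rewrite (Ntens_map_cls X Y f Hf), (Ntens_map_cls Y Z g Hg). reflexivity.
Qed.

Lemma Ntens_map_id (X : SqRaw) c : Ntens_map X X (fun x => x) c = c.
Proof. unfold Ntens_map. rewrite <- surjective_pairing. apply cls_rep. Qed.

(** * Coordinates on a square metric space *)

Lemma M0_00 : inM0 0 0.
Proof. split; [lra | split; [lra | solve_M0]]. Qed.

Definition L1 (r s t u : R) : R := Rabs (r - t) + Rabs (s - u).

Lemma M0_closed r s : 0 <= r <= 1 -> 0 <= s <= 1 ->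
  (forall eps, 0 < eps -> exists t u, inM0 t u /\ L1 r s t u < eps) -> inM0 r s.
Proof.
  intros Hr Hs H. split; [auto | split; [auto|]].
  apply NNPP; intro Hn.
  set (m := Rmin (Rmin r (1 - r)) (Rmin s (1 - s))).
  assert (Hm : 0 < m) by (unfold m; repeat apply Rmin_glb_lt; lra).
  destruct (H m Hm) as (t & u & (Ht & Hu & Hside) & Hl).
  unfold L1, m in *.
  pose proof (Rmin_l (Rmin r (1 - r)) (Rmin s (1 - s))).
  pose proof (Rmin_r (Rmin r (1 - r)) (Rmin s (1 - s))).
  pose proof (Rmin_l r (1 - r)). pose proof (Rmin_r r (1 - r)).
  pose proof (Rmin_l s (1 - s)). pose proof (Rmin_r s (1 - s)).
  destruct Hside as [-> | [-> | [-> | ->]]]; lra_abs.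
Qed.

Section SquareGeometry.
Context (X : SqRaw) (HX : isSquaMS X).
Notation d := (dist X).

Lemma dist_side_left s u : 0 <= s <= 1 -> 0 <= u <= 1 -> d (sq X 0 s) (sq X 0 u) = Rabs (u - s).
Proof. intros. apply (sq1 X HX 0 s u); auto. Qed.
Lemma dist_side_right s u : 0 <= s <= 1 -> 0 <= u <= 1 -> d (sq X 1 s) (sq X 1 u) = Rabs (u - s).
Proof. intros. apply (sq1 X HX 1 s u); auto. Qed.
Lemma dist_side_bottom s u : 0 <= s <= 1 -> 0 <= u <= 1 -> d (sq X s 0) (sq X u 0) = Rabs (u - s).
Proof. intros. apply (sq1 X HX 0 s u); auto. Qed.
Lemma dist_side_top s u : 0 <= s <= 1 -> 0 <= u <= 1 -> d (sq X s 1) (sq X u 1) = Rabs (u - s).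
Proof. intros. apply (sq1 X HX 1 s u); auto. Qed.

Local Ltac sides := repeat first
  [ rewrite dist_side_left by lra | rewrite dist_side_right by lra
  | rewrite dist_side_bottom by lra | rewrite dist_side_top by lra ].

Local Ltac via_corner cx cy :=
  eapply Rle_trans; [apply (sq_tri X HX _ (sq X cx cy))|]; sides; lra_abs.

(* Going along the boundary is short as long as one need not go around the square. *)
Lemma dist_sq_le_L1 r s t u : inM0 r s -> inM0 t u -> L1 r s t u < 1 ->
  d (sq X r s) (sq X t u) <= L1 r s t u.
Proof.
  intros (Hr & Hs & Hp) (Ht & Hu & Hq) Hl. unfold L1 in *.
  destruct Hp as [-> | [-> | [-> | ->]]]; destruct Hq as [-> | [-> | [-> | ->]]];
  try (sides; lra_abs);
  first [via_corner 0 0 | via_corner 0 1 | via_corner 1 0 | via_corner 1 1 | lra_abs].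
Qed.

Definition inf_boundary (g : R -> R -> R) (z : car X) : R :=
  infR (fun c => exists t u, inM0 t u /\ c = g t u + d z (sq X t u)).

Section InfBoundary.
Context (g : R -> R -> R) (B : R) (HB : forall t u, inM0 t u -> B <= g t u).

Lemma inf_boundary_inhabited z :
  exists c, exists t u, inM0 t u /\ c = g t u + d z (sq X t u).
Proof. exists (g 0 0 + d z (sq X 0 0)), 0, 0. split; [apply M0_00 | reflexivity]. Qed.

Lemma inf_boundary_bounded z c :
  (exists t u, inM0 t u /\ c = g t u + d z (sq X t u)) -> B <= c.
Proof.
  intros (t & u & H & ->). pose proof (HB t u H). pose proof (dist_nonneg X HX z (sq X t u)). lra.
Qed.

Lemma inf_boundary_le z t u : inM0 t u -> inf_boundary g z <= g t u + d z (sq X t u).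
Proof.
  intro H. apply (infR_le _ B); [apply inf_boundary_inhabited | apply inf_boundary_bounded |].
  exists t, u. auto.
Qed.

Lemma inf_boundary_ge z m :
  (forall t u, inM0 t u -> m <= g t u + d z (sq X t u)) -> m <= inf_boundary g z.
Proof.
  intro H. apply (infR_ge _ B); [apply inf_boundary_inhabited | apply inf_boundary_bounded |].
  intros c (t & u & Ht & ->). auto.
Qed.

Lemma inf_boundary_approx z eps : 0 < eps ->
  exists t u, inM0 t u /\ g t u + d z (sq X t u) < inf_boundary g z + eps.
Proof.
  intro Heps.
  destruct (infR_approx _ B (inf_boundary_inhabited z) (inf_boundary_bounded z) eps Heps)
    as (c & (t & u & Ht & ->) & Hc).
  exists t, u. auto.
Qed.

Lemma inf_boundary_lipschitz z z' : Rabs (inf_boundary g z - inf_boundary g z') <= d z z'.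
Proof.
  assert (Hone : forall z z', inf_boundary g z - d z z' <= inf_boundary g z').
  { intros x x'. apply inf_boundary_ge. intros t u H. pose proof (inf_boundary_le x t u H).
    pose proof (sq_tri X HX x x' (sq X t u)). lra. }
  pose proof (Hone z z'). pose proof (Hone z' z) as H'. rewrite (sq_sym X HX z' z) in H'.
  apply Rabs_le. lra.
Qed.

End InfBoundary.

(* By (sq2), [coord_sum] and [coord_diff] take the values r + s and r - s at S(r, s); being
   1-Lipschitz, they give L1-short coordinates on X that invert S on M0. *)
Definition coord_sum := inf_boundary Rplus.
Definition coord_diff := inf_boundary Rminus.
Definition boundary_dist := inf_boundary (fun _ _ => 0).

Lemma Rplus_M0_lower t u : inM0 t u -> 0 <= t + u.
Proof. intros (H1 & H2 & _). lra. Qed.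
Lemma Rminus_M0_lower t u : inM0 t u -> -1 <= t - u.
Proof. intros (H1 & H2 & _). lra. Qed.
Lemma zero_M0_lower t u : inM0 t u -> 0 <= (fun _ _ => 0) t u.
Proof. intros. lra. Qed.

Lemma coord_sum_sq r s : inM0 r s -> coord_sum (sq X r s) = r + s.
Proof.
  intro H. apply Rle_antisym.
  - pose proof (inf_boundary_le _ _ Rplus_M0_lower (sq X r s) r s H) as Hle.
    rewrite dist_refl in Hle by auto. unfold coord_sum. lra.
  - apply (inf_boundary_ge _ _ Rplus_M0_lower). intros t u Ht.
    pose proof (sq2 X HX r s t u H Ht). lra_abs.
Qed.

Lemma coord_diff_sq r s : inM0 r s -> coord_diff (sq X r s) = r - s.
Proof.
  intro H. apply Rle_antisym.
  - pose proof (inf_boundary_le _ _ Rminus_M0_lower (sq X r s) r s H) as Hle.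
    rewrite dist_refl in Hle by auto. unfold coord_diff. lra.
  - apply (inf_boundary_ge _ _ Rminus_M0_lower). intros t u Ht.
    pose proof (sq2 X HX r s t u H Ht). lra_abs.
Qed.

Definition clamp (x : R) : R := Rmax 0 (Rmin 1 x).

Lemma clamp_range x : 0 <= clamp x <= 1.
Proof. unfold clamp, Rmax, Rmin. repeat destruct Rle_dec; lra. Qed.
Lemma clamp_id x : 0 <= x <= 1 -> clamp x = x.
Proof. intro. unfold clamp, Rmax, Rmin. repeat destruct Rle_dec; lra. Qed.
Lemma clamp_lipschitz x y : Rabs (clamp x - clamp y) <= Rabs (x - y).
Proof. unfold clamp, Rmax, Rmin. repeat destruct Rle_dec; lra_abs. Qed.

Definition coord_x z := clamp ((coord_sum z + coord_diff z) / 2).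
Definition coord_y z := clamp ((coord_sum z - coord_diff z) / 2).

Lemma coord_range z : 0 <= coord_x z <= 1 /\ 0 <= coord_y z <= 1.
Proof. split; apply clamp_range. Qed.

Lemma coord_sq r s : inM0 r s -> coord_x (sq X r s) = r /\ coord_y (sq X r s) = s.
Proof.
  intro H. unfold coord_x, coord_y. rewrite coord_sum_sq, coord_diff_sq by auto.
  destruct H as (H1 & H2 & _).
  replace ((r + s + (r - s)) / 2) with r by lra. replace ((r + s - (r - s)) / 2) with s by lra.
  split; apply clamp_id; lra.
Qed.

Lemma coord_lipschitz z z' :
  Rabs (coord_x z - coord_x z') + Rabs (coord_y z - coord_y z') <= d z z'.
Proof.
  pose proof (inf_boundary_lipschitz _ _ Rplus_M0_lower z z') as HU.
  pose proof (inf_boundary_lipschitz _ _ Rminus_M0_lower z z') as HV.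
  fold coord_sum in HU. fold coord_diff in HV.
  pose proof (clamp_lipschitz ((coord_sum z + coord_diff z) / 2)
                              ((coord_sum z' + coord_diff z') / 2)).
  pose proof (clamp_lipschitz ((coord_sum z - coord_diff z) / 2)
                              ((coord_sum z' - coord_diff z') / 2)).
  unfold coord_x, coord_y. lra_abs.
Qed.

Lemma boundary_dist_nonneg z : 0 <= boundary_dist z.
Proof.
  apply (inf_boundary_ge _ _ zero_M0_lower). intros t u _.
  pose proof (dist_nonneg X HX z (sq X t u)). lra.
Qed.

Lemma boundary_dist_le z t u : inM0 t u -> boundary_dist z <= d z (sq X t u).
Proof.
  intro H. pose proof (inf_boundary_le _ _ zero_M0_lower z t u H). unfold boundary_dist. lra.
Qed.

Lemma boundary_dist_sq t u : inM0 t u -> boundary_dist (sq X t u) = 0.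
Proof.
  intro H. pose proof (boundary_dist_le (sq X t u) t u H) as Hle. rewrite dist_refl in Hle by auto.
  pose proof (boundary_dist_nonneg (sq X t u)). lra.
Qed.

Lemma boundary_dist_lipschitz z z' : Rabs (boundary_dist z - boundary_dist z') <= d z z'.
Proof. apply (inf_boundary_lipschitz _ _ zero_M0_lower). Qed.

Lemma boundary_dist_le_2 z : boundary_dist z <= 2.
Proof.
  pose proof (boundary_dist_le z 0 0 M0_00). pose proof (sq_bound X HX z (sq X 0 0)). lra.
Qed.

Lemma boundary_dist_approx z eps : 0 < eps ->
  exists t u, inM0 t u /\ d z (sq X t u) < boundary_dist z + eps.
Proof.
  intro Heps. destruct (inf_boundary_approx _ _ zero_M0_lower z eps Heps) as (t & u & H & H').
  exists t, u. split; auto. unfold boundary_dist. lra.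
Qed.

Lemma boundary_dist_zero z : boundary_dist z = 0 -> exists r s, inM0 r s /\ z = sq X r s.
Proof.
  intro H0.
  assert (Hnear : forall eps, 0 < eps -> exists t u, inM0 t u /\
            L1 t u (coord_x z) (coord_y z) < eps /\ d z (sq X t u) < eps).
  { intros eps Heps. destruct (boundary_dist_approx z eps Heps) as (t & u & Ht & Hd).
    exists t, u. split; auto. pose proof (coord_lipschitz z (sq X t u)) as Hc.
    destruct (coord_sq t u Ht) as [E1 E2]. rewrite E1, E2 in Hc. unfold L1.
    rewrite (Rabs_minus_sym t), (Rabs_minus_sym u). lra. }
  assert (HM : inM0 (coord_x z) (coord_y z)).
  { destruct (coord_range z). apply M0_closed; auto.
    intros eps Heps. destruct (Hnear eps Heps) as (t & u & Ht & HL & _).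
    exists t, u. unfold L1 in *. rewrite (Rabs_minus_sym t), (Rabs_minus_sym u) in HL. auto. }
  exists (coord_x z), (coord_y z). split; auto.
  apply (sq_zero X HX). apply Rle_antisym; [|apply dist_nonneg; auto].
  apply Rle_plus_epsilon. intros eps Heps.
  destruct (Hnear (Rmin (eps / 2) 1)) as (t & u & Ht & HL & Hd); [apply Rmin_glb_lt; lra|].
  pose proof (Rmin_l (eps / 2) 1). pose proof (Rmin_r (eps / 2) 1).
  pose proof (dist_sq_le_L1 t u (coord_x z) (coord_y z) Ht HM ltac:(lra)).
  pose proof (sq_tri X HX z (sq X t u) (sq X (coord_x z) (coord_y z))). lra.
Qed.

End SquareGeometry.

(** * N (x) X is a square metric space *)

Lemma toR_range t : 0 <= toR t <= 2.
Proof. destruct t; simpl; lra. Qed.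

Definition succ3 (t : three) : three := match t with I0 => I1 | I1 => I2 | I2 => I2 end.

Lemma toR_succ3 t : t <> I2 -> toR (succ3 t) = toR t + 1.
Proof. destruct t; simpl; intro; try lra; congruence. Qed.

Lemma ncoord_cell m r : 0 <= r <= 1 ->
  ncoord ((toR m + r) / 3) = m \/
  (r = 1 /\ m <> I2 /\ ncoord ((toR m + r) / 3) = succ3 m).
Proof.
  intro H. destruct (Req_dec r 1) as [->|Hr].
  - destruct m; unfold ncoord; simpl; repeat destruct Rlt_dec; try lra;
      first [left; reflexivity | right; split; [reflexivity | split; [discriminate | reflexivity]]].
  - left. destruct m; unfold ncoord; simpl; repeat destruct Rlt_dec; try lra; reflexivity.
Qed.

Section NtensSquare.
Context (X : SqRaw) (HX : isSquaMS X).
Notation d := (dist X).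
Notation E := (eqcl (gen X)).
Notation qd := (qdist X).

Definition pos_x (a : Npre X) : R := (toR (fst (fst a)) + coord_x X (snd a)) / 3.
Definition pos_y (a : Npre X) : R := (toR (snd (fst a)) + coord_y X (snd a)) / 3.

Lemma pos_range a : 0 <= pos_x a <= 1 /\ 0 <= pos_y a <= 1.
Proof.
  unfold pos_x, pos_y. destruct (coord_range X (snd a)).
  pose proof (toR_range (fst (fst a))). pose proof (toR_range (snd (fst a))).
  destruct (fst (fst a)), (snd (fst a)); simpl in *; split; lra.
Qed.

Lemma pos_sq n r s : inM0 r s ->
  pos_x (n, sq X r s) = (toR (fst n) + r) / 3 /\ pos_y (n, sq X r s) = (toR (snd n) + s) / 3.
Proof. intro H. unfold pos_x, pos_y. simpl. destruct (coord_sq X HX r s H) as [-> ->]. auto. Qed.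

Lemma pos_gen a b : gen X a b -> pos_x a = pos_x b /\ pos_y a = pos_y b.
Proof.
  intros (m & n & r & s & r' & s' & H1 & H2 & H3 & H4 & H5 & -> & ->).
  destruct (pos_sq m r s H1) as [-> ->]. destruct (pos_sq n r' s' H2) as [-> ->]. auto.
Qed.

Lemma pos_L1_le_qdist a b : Rabs (pos_x a - pos_x b) + Rabs (pos_y a - pos_y b) <= qd a b.
Proof.
  assert (Hsigned : forall sx sy, (sx = 1 \/ sx = -1) -> (sy = 1 \/ sy = -1) ->
    Rabs ((sx * pos_x b + sy * pos_y b) - (sx * pos_x a + sy * pos_y a)) <= qd a b).
  { intros sx sy Hx Hy. apply (qdist_ge_potential X HX (fun a => sx * pos_x a + sy * pos_y a)).
    - intros u v H. destruct (pos_gen u v H) as [-> ->]. reflexivity.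
    - intros u v. unfold d0. destruct N_eq_dec as [e|ne].
      + unfold pos_x, pos_y. rewrite e. pose proof (coord_lipschitz X HX (snd u) (snd v)).
        destruct Hx as [-> | ->]; destruct Hy as [-> | ->]; lra_abs.
      + destruct (pos_range u), (pos_range v).
        destruct Hx as [-> | ->]; destruct Hy as [-> | ->]; lra_abs. }
  assert (Hp : 1 = 1 \/ 1 = -1) by auto. assert (Hm : -1 = 1 \/ -1 = -1) by auto.
  pose proof (Hsigned 1 1 Hp Hp). pose proof (Hsigned 1 (-1) Hp Hm).
  pose proof (Hsigned (-1) 1 Hm Hp). pose proof (Hsigned (-1) (-1) Hm Hm).
  lra_abs.
Qed.

Lemma L1_le_qdist_same_cell n r s t u : inM0 r s -> inM0 t u ->
  Rabs (r - t) + Rabs (s - u) <= 3 * qd (n, sq X r s) (n, sq X t u).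
Proof.
  intros H1 H2. pose proof (pos_L1_le_qdist (n, sq X r s) (n, sq X t u)) as H.
  destruct (pos_sq n r s H1) as [E1 E2]. destruct (pos_sq n t u H2) as [E3 E4].
  rewrite E1, E2, E3, E4 in H.
  replace ((toR (fst n) + r) / 3 - (toR (fst n) + t) / 3) with ((r - t) / 3) in H by lra.
  replace ((toR (snd n) + s) / 3 - (toR (snd n) + u) / 3) with ((s - u) / 3) in H by lra.
  rewrite !Rabs_div, (Rabs_pos_eq 3) in H by lra. lra.
Qed.

(* Distance from [(n, z)] as seen from inside its cell: leaving the cell costs at least
   [boundary_dist z / 3]. *)
Definition local_potential (n : N) (z : car X) (a : Npre X) : R :=
  if N_eq_dec (fst a) n
  then Rmin (d z (snd a)) (boundary_dist X z + boundary_dist X (snd a)) / 3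
  else boundary_dist X z / 3.

Lemma local_potential_gen n z a b : gen X a b -> local_potential n z a = local_potential n z b.
Proof.
  intros (m & m' & r & s & r' & s' & H1 & H2 & H3 & H4 & H5 & -> & ->).
  assert (Hv : forall k t u, inM0 t u -> local_potential n z (k, sq X t u) = boundary_dist X z / 3).
  { intros k t u H. unfold local_potential. simpl. destruct N_eq_dec; [|reflexivity].
    rewrite boundary_dist_sq, Rplus_0_r by auto.
    pose proof (boundary_dist_le X HX z t u H). rewrite Rmin_right by lra. reflexivity. }
  rewrite !Hv; auto.
Qed.

Lemma Rmin_lipschitz a b a' b' D : Rabs (a - a') <= D -> Rabs (b - b') <= D ->
  Rabs (Rmin a b - Rmin a' b') <= D.
Proof. intros. unfold Rmin. repeat destruct Rle_dec; lra_abs. Qed.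

Lemma local_potential_step n z a b :
  Rabs (local_potential n z b - local_potential n z a) <= d0 X a b.
Proof.
  pose proof (boundary_dist_nonneg X HX z) as Hz0. pose proof (boundary_dist_le_2 X HX z) as Hz2.
  assert (Hmin : forall w, 0 <= Rmin (d z w) (boundary_dist X z + boundary_dist X w) <= d z w).
  { intro w. pose proof (boundary_dist_nonneg X HX w). pose proof (dist_nonneg X HX z w).
    split; [apply Rmin_glb; lra | apply Rmin_l]. }
  pose proof (Hmin (snd a)) as Ha. pose proof (Hmin (snd b)) as Hb.
  pose proof (sq_bound X HX z (snd a)) as Ha2. pose proof (sq_bound X HX z (snd b)) as Hb2.
  unfold local_potential, d0. destruct (N_eq_dec (fst a) (fst b)) as [e|ne].
  - rewrite e. destruct N_eq_dec.
    + assert (Hlip : Rabs (Rmin (d z (snd b)) (boundary_dist X z + boundary_dist X (snd b)) -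
                  Rmin (d z (snd a)) (boundary_dist X z + boundary_dist X (snd a)))
                <= d (snd a) (snd b)).
      { apply Rmin_lipschitz.
        - pose proof (sq_tri X HX z (snd a) (snd b)). pose proof (sq_tri X HX z (snd b) (snd a)).
          rewrite (sq_sym X HX (snd b) (snd a)) in *. apply Rabs_le. lra.
        - pose proof (boundary_dist_lipschitz X HX (snd b) (snd a)) as H.
          rewrite (sq_sym X HX) in H. lra_abs. }
      lra_abs.
    + rewrite Rminus_diag, Rabs_R0. pose proof (dist_nonneg X HX (snd a) (snd b)). lra.
  - destruct (N_eq_dec (fst a) n), (N_eq_dec (fst b) n); lra_abs.
Qed.

Lemma local_potential_le_qdist n z b : local_potential n z b <= qd (n, z) b.
Proof.
  pose proof (qdist_ge_potential X HX (local_potential n z)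
    (local_potential_gen n z) (local_potential_step n z) (n, z) b) as H.
  replace (local_potential n z (n, z)) with 0 in H; [lra_abs|].
  unfold local_potential. simpl. destruct N_eq_dec; [|congruence].
  rewrite dist_refl by auto. pose proof (boundary_dist_nonneg X HX z).
  rewrite Rmin_left by lra. lra.
Qed.

Lemma qdist_same_cell_ge n z w :
  Rmin (d z w) (boundary_dist X z + boundary_dist X w) / 3 <= qd (n, z) (n, w).
Proof.
  pose proof (local_potential_le_qdist n z (n, w)) as H. unfold local_potential in H.
  simpl in H. destruct N_eq_dec; [exact H | congruence].
Qed.

Lemma qdist_zero_off_boundary n z b : 0 < boundary_dist X z -> qd (n, z) b = 0 -> b = (n, z).
Proof.
  intros Hb H0. pose proof (local_potential_le_qdist n z b) as H. rewrite H0 in H.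
  unfold local_potential in H. destruct b as [m w]. simpl in H.
  destruct N_eq_dec as [->|ne]; [|lra].
  pose proof (boundary_dist_nonneg X HX w). pose proof (dist_nonneg X HX z w).
  assert (Hd : d z w = 0) by (unfold Rmin in H; destruct Rle_dec; lra).
  apply (sq_zero X HX) in Hd. subst. reflexivity.
Qed.

Lemma gen_right_left m1 m2 s : m1 <> I2 -> 0 <= s <= 1 ->
  gen X ((m1, m2), sq X 1 s) ((succ3 m1, m2), sq X 0 s).
Proof.
  intros Hm Hs. pose proof (toR_succ3 m1 Hm).
  exists (m1, m2), (succ3 m1, m2), 1, s, 0, s. unfold adjacent. cbn [fst snd]. rewrite H.
  split; [split; [lra | split; [lra | solve_M0]]|].
  split; [split; [lra | split; [lra | solve_M0]]|].
  split; [right; split; [reflexivity | lra_abs]|].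
  repeat split; lra.
Qed.

Lemma gen_top_bottom m1 m2 r : m2 <> I2 -> 0 <= r <= 1 ->
  gen X ((m1, m2), sq X r 1) ((m1, succ3 m2), sq X r 0).
Proof.
  intros Hm Hr. pose proof (toR_succ3 m2 Hm).
  exists (m1, m2), (m1, succ3 m2), r, 1, r, 0. unfold adjacent. cbn [fst snd]. rewrite H.
  split; [split; [lra | split; [lra | solve_M0]]|].
  split; [split; [lra | split; [lra | solve_M0]]|].
  split; [left; split; [reflexivity | lra_abs]|].
  repeat split; lra.
Qed.

Definition canon (P Q : R) : Npre X :=
  ((ncoord P, ncoord Q), sq X (3 * P - toR (ncoord P)) (3 * Q - toR (ncoord Q))).

Lemma eqcl_canon m r s : inM0 r s ->
  E (m, sq X r s) (canon ((toR (fst m) + r) / 3) ((toR (snd m) + s) / 3)).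
Proof.
  intros (Hr & Hs & _). destruct m as [m1 m2]. simpl. unfold canon.
  destruct (ncoord_cell m1 r Hr) as [Ex | (-> & Hm1 & Ex)];
  destruct (ncoord_cell m2 s Hs) as [Ey | (-> & Hm2 & Ey)];
  rewrite Ex, Ey; rewrite ?toR_succ3 by auto.
  - replace (3 * ((toR m1 + r) / 3) - toR m1) with r by lra.
    replace (3 * ((toR m2 + s) / 3) - toR m2) with s by lra. apply rst_refl.
  - replace (3 * ((toR m1 + r) / 3) - toR m1) with r by lra.
    replace (3 * ((toR m2 + 1) / 3) - (toR m2 + 1)) with 0 by lra.
    apply rst_step, gen_top_bottom; [auto | lra].
  - replace (3 * ((toR m1 + 1) / 3) - (toR m1 + 1)) with 0 by lra.
    replace (3 * ((toR m2 + s) / 3) - toR m2) with s by lra.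
    apply rst_step, gen_right_left; [auto | lra].
  - replace (3 * ((toR m1 + 1) / 3) - (toR m1 + 1)) with 0 by lra.
    replace (3 * ((toR m2 + 1) / 3) - (toR m2 + 1)) with 0 by lra.
    apply rst_trans with ((succ3 m1, m2), sq X 0 1).
    + apply rst_step, gen_right_left; [auto | lra].
    + apply rst_step, gen_top_bottom; [auto | lra].
Qed.

Lemma eqcl_glue m n r s t u : inM0 r s -> inM0 t u ->
  (toR (fst m) + r) / 3 = (toR (fst n) + t) / 3 ->
  (toR (snd m) + s) / 3 = (toR (snd n) + u) / 3 ->
  E (m, sq X r s) (n, sq X t u).
Proof.
  intros H1 H2 Ex Ey. apply rst_trans with (canon ((toR (fst m) + r) / 3) ((toR (snd m) + s) / 3)).
  - apply eqcl_canon, H1.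
  - rewrite Ex, Ey. apply rst_sym, eqcl_canon, H2.
Qed.

Lemma qdist_zero_eqcl a b : qd a b = 0 -> E a b.
Proof.
  intro H. destruct a as [n z], b as [m w].
  pose proof (boundary_dist_nonneg X HX z). pose proof (boundary_dist_nonneg X HX w).
  destruct (Req_dec (boundary_dist X z) 0) as [Bz|Bz].
  - destruct (Req_dec (boundary_dist X w) 0) as [Bw|Bw].
    + destruct (boundary_dist_zero X HX z Bz) as (r & s & Hrs & ->).
      destruct (boundary_dist_zero X HX w Bw) as (t & u & Htu & ->).
      pose proof (pos_L1_le_qdist (n, sq X r s) (m, sq X t u)) as HL. rewrite H in HL.
      destruct (pos_sq n r s Hrs) as [E1 E2]. destruct (pos_sq m t u Htu) as [E3 E4].
      rewrite E1, E2, E3, E4 in HL.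
      pose proof (Rabs_pos ((toR (fst n) + r) / 3 - (toR (fst m) + t) / 3)).
      pose proof (Rabs_pos ((toR (snd n) + s) / 3 - (toR (snd m) + u) / 3)).
      apply eqcl_glue; auto; lra_abs.
    + rewrite qdist_sym in H by auto. apply qdist_zero_off_boundary in H; [|lra].
      rewrite H. apply rst_refl.
  - apply qdist_zero_off_boundary in H; [|lra]. rewrite H. apply rst_refl.
Qed.

End NtensSquare.

Section Thirds.
Context (D : R -> R -> R) (D_tri : forall a b c, D a c <= D a b + D b c)
  (D_third : forall j : three, forall y y', toR j / 3 <= y <= (toR j + 1) / 3 ->
     toR j / 3 <= y' <= (toR j + 1) / 3 -> D y y' <= Rabs (y - y')).

Lemma le_abs_through a b c : D a b <= Rabs (a - b) -> D b c <= Rabs (b - c) ->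
  (a <= b <= c \/ c <= b <= a) -> D a c <= Rabs (a - c).
Proof. intros H1 H2 H3. pose proof (D_tri a b c). lra_abs. Qed.

Lemma le_abs_of_thirds y y' : 0 <= y <= 1 -> 0 <= y' <= 1 -> D y y' <= Rabs (y - y').
Proof.
  assert (T0 : forall y y', 0 <= y <= 1/3 -> 0 <= y' <= 1/3 -> D y y' <= Rabs (y - y'))
    by (intros; apply (D_third I0); simpl; lra).
  assert (T1 : forall y y', 1/3 <= y <= 2/3 -> 1/3 <= y' <= 2/3 -> D y y' <= Rabs (y - y'))
    by (intros; apply (D_third I1); simpl; lra).
  assert (T2 : forall y y', 2/3 <= y <= 1 -> 2/3 <= y' <= 1 -> D y y' <= Rabs (y - y'))
    by (intros; apply (D_third I2); simpl; lra).
  intros Hy Hy'.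
  destruct (Rle_dec y (1/3)); [|destruct (Rle_dec y (2/3))];
  (destruct (Rle_dec y' (1/3)); [|destruct (Rle_dec y' (2/3))]).
  - apply T0; lra.
  - apply le_abs_through with (1/3); [apply T0 | apply T1 |]; lra.
  - apply le_abs_through with (1/3); [apply T0 | | lra]; try lra.
    apply le_abs_through with (2/3); [apply T1 | apply T2 |]; lra.
  - apply le_abs_through with (1/3); [apply T1 | apply T0 |]; lra.
  - apply T1; lra.
  - apply le_abs_through with (2/3); [apply T1 | apply T2 |]; lra.
  - apply le_abs_through with (2/3); [apply T2 | | lra]; try lra.
    apply le_abs_through with (1/3); [apply T1 | apply T0 |]; lra.
  - apply le_abs_through with (2/3); [apply T2 | apply T1 |]; lra.
  - apply T2; lra.
Qed.

End Thirds.

Section NtensSquaMS.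
Context (X : SqRaw) (HX : isSquaMS X).
Notation d := (dist X).

Lemma Ntens_dist_sq_ge r s t u : inM0 r s -> inM0 t u ->
  Rabs (r - t) + Rabs (s - u) <= dist (Ntens X) (sq (Ntens X) r s) (sq (Ntens X) t u).
Proof.
  intros H1 H2. simpl sq. rewrite Ntens_dist_cls by auto.
  pose proof (pos_L1_le_qdist X HX (canon X r s) (canon X t u)) as H.
  assert (Hpos : forall r s, inM0 r s -> pos_x X (canon X r s) = r /\ pos_y X (canon X r s) = s).
  { intros a b Hab. unfold canon. pose proof (ncoord_M0 a b Hab) as HM.
    unfold pos_x, pos_y. simpl. destruct (coord_sq X HX _ _ HM) as [-> ->]. split; lra. }
  destruct (Hpos r s H1) as [E1 E2]. destruct (Hpos t u H2) as [E3 E4].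
  rewrite E1, E2, E3, E4 in H. exact H.
Qed.

Lemma Ntens_sq_cell r s (n : N) : inM0 r s ->
  inM0 (3 * r - toR (fst n)) (3 * s - toR (snd n)) ->
  sq (Ntens X) r s = cls (gen X) (n, sq X (3 * r - toR (fst n)) (3 * s - toR (snd n))).
Proof.
  intros H1 H2. apply cls_eq. apply eqcl_glue; auto; [apply ncoord_M0; auto | simpl; lra ..].
Qed.

Lemma inM0_vertical i y : (i = 0 \/ i = 1) -> 0 <= y <= 1 -> inM0 i y.
Proof. intros [-> | ->] Hy; (split; [lra | split; [lra | solve_M0]]). Qed.

Lemma inM0_horizontal i x : (i = 0 \/ i = 1) -> 0 <= x <= 1 -> inM0 x i.
Proof. intros [-> | ->] Hx; (split; [lra | split; [lra | solve_M0]]). Qed.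

Lemma ncoord_side i : (i = 0 \/ i = 1) -> 3 * i - toR (ncoord i) = i.
Proof. intros [-> | ->]; [rewrite ncoord_0 | rewrite ncoord_1]; simpl; lra. Qed.

Lemma Ntens_dist_vertical_le i r s : (i = 0 \/ i = 1) -> 0 <= r <= 1 -> 0 <= s <= 1 ->
  dist (Ntens X) (sq (Ntens X) i r) (sq (Ntens X) i s) <= Rabs (r - s).
Proof.
  intros Hi Hr Hs.
  apply (le_abs_of_thirds (fun r s => dist (Ntens X) (sq (Ntens X) i r) (sq (Ntens X) i s)));
    auto; [intros; apply qdist_tri; auto|].
  intros j y y' Hy Hy'.
  assert (Hcell : forall y, toR j / 3 <= y <= (toR j + 1) / 3 ->
    sq (Ntens X) i y = cls (gen X) ((ncoord i, j), sq X i (3 * y - toR j))).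
  { intros z Hz. pose proof (toR_range j).
    rewrite (Ntens_sq_cell i z (ncoord i, j)); cbn [fst snd];
      rewrite ?(ncoord_side i Hi); [reflexivity | apply inM0_vertical; auto; lra ..]. }
  rewrite !Hcell, Ntens_dist_cls by auto. eapply Rle_trans; [apply qdist_same_cell; auto|].
  rewrite (proj1 (sq1 X HX i (3 * y - toR j) (3 * y' - toR j) Hi ltac:(lra) ltac:(lra))).
  lra_abs.
Qed.

Lemma Ntens_dist_horizontal_le i r s : (i = 0 \/ i = 1) -> 0 <= r <= 1 -> 0 <= s <= 1 ->
  dist (Ntens X) (sq (Ntens X) r i) (sq (Ntens X) s i) <= Rabs (r - s).
Proof.
  intros Hi Hr Hs.
  apply (le_abs_of_thirds (fun r s => dist (Ntens X) (sq (Ntens X) r i) (sq (Ntens X) s i)));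
    auto; [intros; apply qdist_tri; auto|].
  intros j x x' Hx Hx'.
  assert (Hcell : forall x, toR j / 3 <= x <= (toR j + 1) / 3 ->
    sq (Ntens X) x i = cls (gen X) ((j, ncoord i), sq X (3 * x - toR j) i)).
  { intros z Hz. pose proof (toR_range j).
    rewrite (Ntens_sq_cell z i (j, ncoord i)); cbn [fst snd];
      rewrite ?(ncoord_side i Hi); [reflexivity | apply inM0_horizontal; auto; lra ..]. }
  rewrite !Hcell, Ntens_dist_cls by auto. eapply Rle_trans; [apply qdist_same_cell; auto|].
  rewrite (proj2 (sq1 X HX i (3 * x - toR j) (3 * x' - toR j) Hi ltac:(lra) ltac:(lra))).
  lra_abs.
Qed.

Lemma Ntens_SquaMS : isSquaMS (Ntens X).
Proof.
  constructor.
  - intros c c'. split.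
    + intro H. rewrite <- (cls_rep _ c), <- (cls_rep _ c'). apply cls_eq, qdist_zero_eqcl; auto.
    + intros ->. apply qdist_eqcl; auto. apply rst_refl.
  - intros. apply qdist_sym; auto.
  - intros. apply qdist_tri; auto.
  - intros. apply qdist_le_2; auto.
  - intros r s r' s' H1 H2 H. pose proof (Ntens_dist_sq_ge r s r' s' H1 H2) as Hge.
    rewrite H in Hge.
    assert (H0 : forall c, dist (Ntens X) c c = 0) by (intro; apply qdist_eqcl, rst_refl; auto).
    rewrite H0 in Hge.
    pose proof (Rabs_pos (r - r')). pose proof (Rabs_pos (s - s')). split; lra_abs.
  - intros i r s Hi Hr Hs.
    pose proof (Ntens_dist_sq_ge i r i s (inM0_vertical i r Hi Hr) (inM0_vertical i s Hi Hs)).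
    pose proof (Ntens_dist_sq_ge r i s i (inM0_horizontal i r Hi Hr) (inM0_horizontal i s Hi Hs)).
    rewrite Rminus_diag, Rabs_R0 in *. pose proof (Rabs_minus_sym r s).
    split; apply Rle_antisym; try lra; rewrite Rabs_minus_sym.
    + apply Ntens_dist_vertical_le; auto.
    + apply Ntens_dist_horizontal_le; auto.
  - intros r s t u H1 H2. apply Rle_ge, Ntens_dist_sq_ge; auto.
Qed.

End NtensSquaMS.

(** * Cauchy completion *)

Section Completion.
Context (X : SqRaw) (HX : isSquaMS X).
Notation d := (dist X).
Notation C := (Compl X HX).

Definition seq_dist (a b : CS X) : R :=
  real (Lim_seq (fun k => d (proj1_sig a k) (proj1_sig b k))).

Lemma seq_dist_spec a b : Un_cv (fun k => d (proj1_sig a k) (proj1_sig b k)) (seq_dist a b).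
Proof.
  assert (Hc : Cauchy_crit (fun k => d (proj1_sig a k) (proj1_sig b k))).
  { intros eps Heps. destruct (proj2_sig a (eps / 2) ltac:(lra)) as [Na Ha].
    destruct (proj2_sig b (eps / 2) ltac:(lra)) as [Nb Hb].
    exists (max Na Nb). intros n m Hn Hm. unfold Rdist.
    specialize (Ha n m ltac:(lia) ltac:(lia)). specialize (Hb n m ltac:(lia) ltac:(lia)).
    pose proof (sq_tri X HX (proj1_sig a n) (proj1_sig a m) (proj1_sig b n)).
    pose proof (sq_tri X HX (proj1_sig a m) (proj1_sig b m) (proj1_sig b n)).
    pose proof (sq_tri X HX (proj1_sig a m) (proj1_sig a n) (proj1_sig b m)).
    pose proof (sq_tri X HX (proj1_sig a n) (proj1_sig b n) (proj1_sig b m)).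
    rewrite (sq_sym X HX (proj1_sig b m) (proj1_sig b n)) in *.
    rewrite (sq_sym X HX (proj1_sig a m) (proj1_sig a n)) in *.
    lra_abs. }
  destruct (Rcomplete.R_complete _ Hc) as [l Hl].
  unfold seq_dist. rewrite (is_lim_seq_unique _ l); [exact Hl |].
  apply is_lim_seq_Reals, Hl.
Qed.

Lemma seq_dist_near a b eps : 0 < eps -> exists N, forall k, (N <= k)%nat ->
  Rabs (d (proj1_sig a k) (proj1_sig b k) - seq_dist a b) < eps.
Proof. intro Heps. exact (seq_dist_spec a b eps Heps). Qed.

Lemma seq_dist_le a b B : (forall eps, 0 < eps -> exists N, forall k, (N <= k)%nat ->
   d (proj1_sig a k) (proj1_sig b k) <= B + eps) -> seq_dist a b <= B.
Proof.
  intro H. apply Rle_plus_epsilon. intros eps Heps.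
  destruct (H (eps / 2) ltac:(lra)) as [N1 H1].
  destruct (seq_dist_near a b (eps / 2) ltac:(lra)) as [N2 H2].
  specialize (H1 (max N1 N2) ltac:(lia)). specialize (H2 (max N1 N2) ltac:(lia)). lra_abs.
Qed.

Lemma seq_dist_nonneg a b : 0 <= seq_dist a b.
Proof.
  apply Rle_plus_epsilon. intros eps Heps. destruct (seq_dist_near a b eps Heps) as [N HN].
  specialize (HN N (le_n N)). pose proof (dist_nonneg X HX (proj1_sig a N) (proj1_sig b N)).
  lra_abs.
Qed.

Lemma seq_dist_sym a b : seq_dist a b = seq_dist b a.
Proof.
  assert (Hle : forall a b, seq_dist a b <= seq_dist b a).
  { intros x y. apply seq_dist_le. intros eps Heps.
    destruct (seq_dist_near y x eps Heps) as [N HN]. exists N. intros k Hk.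
    specialize (HN k Hk). rewrite (sq_sym X HX) in HN. lra_abs. }
  apply Rle_antisym; apply Hle.
Qed.

Lemma seq_dist_tri a b c : seq_dist a c <= seq_dist a b + seq_dist b c.
Proof.
  apply seq_dist_le. intros eps Heps.
  destruct (seq_dist_near a b (eps / 2) ltac:(lra)) as [N1 H1].
  destruct (seq_dist_near b c (eps / 2) ltac:(lra)) as [N2 H2].
  exists (max N1 N2). intros k Hk. specialize (H1 k ltac:(lia)). specialize (H2 k ltac:(lia)).
  pose proof (sq_tri X HX (proj1_sig a k) (proj1_sig b k) (proj1_sig c k)). lra_abs.
Qed.

Lemma crel_iff a b : crel X a b <-> seq_dist a b = 0.
Proof.
  unfold crel. split; intro H.
  - unfold seq_dist. rewrite (is_lim_seq_unique _ 0 H). reflexivity.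
  - apply is_lim_seq_Reals. rewrite <- H. apply seq_dist_spec.
Qed.

Lemma seq_dist_eqcl a b : eqcl (crel X) a b -> seq_dist a b = 0.
Proof.
  induction 1 as [a b Hab | a | a b _ IH | a b c _ IH1 _ IH2].
  - apply crel_iff, Hab.
  - apply Rle_antisym; [|apply seq_dist_nonneg]. apply seq_dist_le. intros eps Heps.
    exists 0%nat. intros. rewrite dist_refl by auto. lra.
  - rewrite seq_dist_sym. exact IH.
  - apply Rle_antisym; [|apply seq_dist_nonneg]. pose proof (seq_dist_tri a b c). lra.
Qed.

Lemma Compl_dist_cls a b : dist C (cls (crel X) a) (cls (crel X) b) = seq_dist a b.
Proof.
  change (seq_dist (rep (cls (crel X) a)) (rep (cls (crel X) b)) = seq_dist a b).
  pose proof (seq_dist_eqcl _ _ (rep_cls _ a)). pose proof (seq_dist_eqcl _ _ (rep_cls _ b)).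
  pose proof (seq_dist_tri (rep (cls (crel X) a)) a (rep (cls (crel X) b))).
  pose proof (seq_dist_tri a (rep (cls (crel X) a)) (rep (cls (crel X) b))).
  pose proof (seq_dist_tri a (rep (cls (crel X) b)) b).
  pose proof (seq_dist_tri a b (rep (cls (crel X) b))).
  rewrite (seq_dist_sym a (rep (cls (crel X) a))) in *. rewrite (seq_dist_sym b _) in *. lra.
Qed.

Definition const_seq (x : car X) : CS X := exist _ (fun _ => x) (const_cauchy X HX x).

Definition embed (x : car X) : car C := cls (crel X) (const_seq x).

Lemma seq_dist_const x y : seq_dist (const_seq x) (const_seq y) = d x y.
Proof.
  unfold seq_dist. simpl. rewrite Lim_seq_const. reflexivity.
Qed.

Lemma Compl_dist_embed x y : dist C (embed x) (embed y) = d x y.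
Proof. unfold embed. rewrite Compl_dist_cls. apply seq_dist_const. Qed.

Lemma embed_morph : is_morph X C embed.
Proof. split; [intros; rewrite Compl_dist_embed; lra | reflexivity]. Qed.

Lemma Compl_SquaMS : isSquaMS C.
Proof.
  constructor.
  - intros A B. split.
    + intro H. rewrite <- (cls_rep _ A), <- (cls_rep _ B). apply cls_eq, rst_step, crel_iff, H.
    + intros ->. apply seq_dist_eqcl, rst_refl.
  - intros. apply seq_dist_sym.
  - intros. apply seq_dist_tri.
  - intros. apply seq_dist_le. intros. exists 0%nat. intros.
    pose proof (sq_bound X HX (proj1_sig (rep x) k) (proj1_sig (rep y) k)). lra.
  - intros r s r' s' H1 H2 H. apply cls_inj, seq_dist_eqcl in H.
    change (seq_dist (const_seq (sq X r s)) (const_seq (sq X r' s')) = 0) in H.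
    rewrite seq_dist_const in H. apply (sq_zero X HX) in H. apply (sq_inj X HX); auto.
  - intros i r s Hi Hr Hs. change (sq C) with (fun r s => embed (sq X r s)). cbv beta.
    rewrite !Compl_dist_embed. apply (sq1 X HX); auto.
  - intros. change (sq C) with (fun r s => embed (sq X r s)). cbv beta.
    rewrite !Compl_dist_embed. apply (sq2 X HX); auto.
Qed.

Lemma Compl_dist_embed_near (a : CS X) eps : 0 < eps -> exists N, forall k, (N <= k)%nat ->
  dist C (cls (crel X) a) (embed (proj1_sig a k)) <= eps.
Proof.
  intro Heps. destruct (proj2_sig a eps Heps) as [N HN]. exists N. intros k Hk.
  unfold embed. rewrite Compl_dist_cls. apply seq_dist_le. intros e He. exists N. intros m Hm.
  specialize (HN m k Hm Hk). simpl. lra.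
Qed.

Lemma Compl_dist_embed_rep_near (A : car C) eps : 0 < eps -> exists N, forall k, (N <= k)%nat ->
  dist C A (embed (proj1_sig (rep A) k)) <= eps.
Proof.
  intro Heps. destruct (Compl_dist_embed_near (rep A) eps Heps) as [N HN].
  rewrite cls_rep in HN. exists N. exact HN.
Qed.

Lemma mkC_cls (u : nat -> car X) (H : cauchy d u) : mkC X HX u = cls (crel X) (exist _ u H).
Proof.
  unfold mkC. destruct excluded_middle_informative as [H'|H']; [|contradiction].
  do 2 f_equal. apply proof_irrelevance.
Qed.

Lemma Compl_complete : complete C.
Proof.
  pose proof Compl_SquaMS as HC. intros a Ha.
  assert (Hz : forall k, exists x, dist C (a k) (embed x) <= third_pow k).
  { intro k. destruct (Compl_dist_embed_rep_near (a k) _ (third_pow_pos k)) as [N HN].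
    eexists. apply (HN N), le_n. }
  destruct (choice _ Hz) as [z Hzk].
  assert (Hzz : forall k m, d (z k) (z m) <= third_pow k + dist C (a k) (a m) + third_pow m).
  { intros k m. rewrite <- Compl_dist_embed.
    pose proof (sq_tri C HC (embed (z k)) (a k) (embed (z m))).
    pose proof (sq_tri C HC (a k) (a m) (embed (z m))).
    rewrite (sq_sym C HC (embed (z k)) (a k)) in H.
    pose proof (Hzk k). pose proof (Hzk m). lra. }
  assert (Hcz : cauchy d z).
  { intros eps Heps. destruct (third_pow_small (eps / 3) ltac:(lra)) as [K1 HK1].
    destruct (Ha (eps / 3) ltac:(lra)) as [K2 HK2]. exists (max K1 K2). intros m n Hm Hn.
    pose proof (Hzz m n). pose proof (HK1 m ltac:(lia)). pose proof (HK1 n ltac:(lia)).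
    pose proof (HK2 m n ltac:(lia) ltac:(lia)). lra. }
  exists (cls (crel X) (exist _ z Hcz)). intros eps Heps.
  destruct (Compl_dist_embed_near (exist _ z Hcz) (eps / 3) ltac:(lra)) as [N1 HN1].
  destruct (third_pow_small (eps / 3) ltac:(lra)) as [N2 HN2].
  exists (max N1 N2). intros k Hk.
  pose proof (sq_tri C HC (a k) (embed (z k)) (cls (crel X) (exist _ z Hcz))) as Htri.
  rewrite (sq_sym C HC (embed (z k))) in Htri.
  pose proof (HN1 k ltac:(lia)) as Hlim. cbn [proj1_sig] in Hlim.
  pose proof (Hzk k). pose proof (HN2 k ltac:(lia)). lra.
Qed.

End Completion.

(** * Lambek's lemma and completeness of N (x) X *)

Lemma morph_inverse_isometry (X Y : SqRaw) f g :
  is_morph X Y f -> is_morph Y X g -> (forall x, g (f x) = x) ->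
  forall a b, dist Y (f a) (f b) = dist X a b.
Proof.
  intros Hf Hg Hgf a b. apply Rle_antisym; [apply (proj1 Hf)|].
  pose proof (proj1 Hg (f a) (f b)) as H. rewrite !Hgf in H. exact H.
Qed.

Lemma lambek (W : SqRaw) (HW : isSquaMS W) (lam : car (Ntens W) -> car W)
  (Hlam : is_morph (Ntens W) W lam)
  (Hinit : forall Y : SqRaw, isSquaMS Y ->
     forall mu : car (Ntens Y) -> car Y, is_morph (Ntens Y) Y mu ->
     exists! g : car W -> car Y,
       is_morph W Y g /\ forall c, g (lam c) = mu (Ntens_map W Y g c)) :
  exists g : car W -> car (Ntens W), is_morph W (Ntens W) g /\
    (forall x, lam (g x) = x) /\ (forall c, g (lam c) = c).
Proof.
  pose proof (Ntens_SquaMS W HW) as HNW.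
  pose proof (Ntens_map_morph (Ntens W) W HNW HW lam Hlam) as Hmu.
  destruct (Hinit (Ntens W) HNW _ Hmu) as [g [[Hg Hgeq] _]].
  destruct (Hinit W HW lam Hlam) as [g0 [_ Huniq]].
  assert (Hlg : (fun x => lam (g x)) = (fun x => x)).
  { transitivity g0; [symmetry|]; apply Huniq.
    - split; [apply morph_comp; auto|]. intro c.
      rewrite Hgeq, (Ntens_map_comp W (Ntens W) W g lam Hg Hlam). reflexivity.
    - split; [apply morph_id|]. intro c. rewrite Ntens_map_id. reflexivity. }
  exists g. split; [auto | split].
  - intro x. exact (f_equal (fun f => f x) Hlg).
  - intro c. rewrite Hgeq, <- (Ntens_map_comp W (Ntens W) W g lam Hg Hlam), Hlg.
    apply Ntens_map_id.
Qed.

Definition allN : list N :=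
  (I0,I0)::(I0,I1)::(I0,I2)::(I1,I0)::(I1,I1)::(I1,I2)::(I2,I0)::(I2,I1)::(I2,I2)::nil.

Lemma in_allN n : In n allN.
Proof. destruct n as [[] []]; simpl; tauto. Qed.

Lemma pigeonhole_N (f : nat -> N) : exists n, forall K, exists k, (K <= k)%nat /\ f k = n.
Proof.
  apply NNPP. intro H.
  assert (H' : forall n, exists K, forall k, (K <= k)%nat -> f k <> n).
  { intro n. apply NNPP. intro H1. apply H. exists n. intro K. apply NNPP. intro H2.
    apply H1. exists K. intros k Hk Hfk. apply H2. exists k. auto. }
  destruct (choice _ H') as [Kf HK].
  set (K := fold_right (fun n acc => max (Kf n) acc) 0%nat allN).
  assert (HKn : forall n, In n allN -> (Kf n <= K)%nat).
  { unfold K. induction allN as [|m l IH]; simpl; [tauto|].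
    intros n [->|Hn]; [lia|]. specialize (IH n Hn). lia. }
  apply (HK (f K) K); [apply HKn, in_allN | reflexivity].
Qed.

Section NtensComplete.
Context (X : SqRaw) (HX : isSquaMS X).
Notation d := (dist X).
Notation qd := (qdist X).

Definition cell_dist (n : N) (x y : car X) : R := qd (n, x) (n, y).

Lemma cauchy_off_boundary n v delta J : 0 < delta ->
  (forall j, (J <= j)%nat -> delta <= boundary_dist X (v j)) ->
  cauchy (cell_dist n) v -> cauchy d v.
Proof.
  intros Hdelta HJ Hv eps Heps.
  assert (He : 0 < Rmin eps (2 * delta)) by (apply Rmin_glb_lt; lra).
  pose proof (Rmin_l eps (2 * delta)). pose proof (Rmin_r eps (2 * delta)).
  set (e := Rmin eps (2 * delta)) in *.
  destruct (Hv (e / 3) ltac:(lra)) as [K HK]. exists (max J K). intros i j Hi Hj.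
  pose proof (qdist_same_cell_ge X HX n (v i) (v j)) as Hge.
  pose proof (HK i j ltac:(lia) ltac:(lia)). unfold cell_dist in *.
  pose proof (HJ i ltac:(lia)). pose proof (HJ j ltac:(lia)).
  unfold Rmin in Hge at 1. destruct Rle_dec; lra.
Qed.

(* Near the boundary of a cell we follow nearby points of S(M0), whose parameters are
   controlled by [L1_le_qdist_same_cell]. *)
Lemma near_boundary_subseq n v :
  (forall i, exists j, (i <= j)%nat /\ boundary_dist X (v j) < third_pow i) ->
  cauchy (cell_dist n) v ->
  exists t w, (forall i, (i <= t i)%nat) /\ cauchy d w /\
    forall i, cell_dist n (v (t i)) (w i) <= third_pow i.
Proof.
  intros Hnear Hv. destruct (choice _ Hnear) as [t Ht].
  assert (Hp : forall i, exists p : R * R, inM0 (fst p) (snd p) /\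
            d (v (t i)) (sq X (fst p) (snd p)) < 2 * third_pow i).
  { intro i.
    destruct (boundary_dist_approx X HX (v (t i)) _ (third_pow_pos i)) as (a & b & Hab & Hd).
    exists (a, b). split; auto. destruct (Ht i). simpl. lra. }
  destruct (choice _ Hp) as [p Hpp].
  set (w := fun i => sq X (fst (p i)) (snd (p i))).
  assert (Hvw : forall i, cell_dist n (v (t i)) (w i) <= third_pow i).
  { intro i. pose proof (qdist_same_cell X HX n (v (t i)) (w i)). destruct (Hpp i).
    pose proof (third_pow_pos i). unfold cell_dist, w in *. lra. }
  exists t, w. split; [intro i; apply Ht | split; [|exact Hvw]].
  assert (HL1 : forall i k, L1 (fst (p i)) (snd (p i)) (fst (p k)) (snd (p k)) <=
            3 * (third_pow i + cell_dist n (v (t i)) (v (t k)) + third_pow k)).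
  { intros i k. unfold L1, cell_dist.
    pose proof (L1_le_qdist_same_cell X HX n _ _ _ _ (proj1 (Hpp i)) (proj1 (Hpp k))).
    pose proof (qdist_tri X HX (n, w i) (n, v (t i)) (n, w k)) as Htri.
    pose proof (qdist_tri X HX (n, v (t i)) (n, v (t k)) (n, w k)).
    rewrite (qdist_sym X HX (n, w i) (n, v (t i))) in Htri.
    pose proof (Hvw i). pose proof (Hvw k). unfold cell_dist, w in *. lra. }
  intros eps Heps.
  assert (He : 0 < Rmin eps 1) by (apply Rmin_glb_lt; lra).
  pose proof (Rmin_l eps 1). pose proof (Rmin_r eps 1).
  set (e := Rmin eps 1) in *.
  destruct (third_pow_small (e / 9) ltac:(lra)) as [K1 HK1].
  destruct (Hv (e / 9) ltac:(lra)) as [K2 HK2].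
  exists (max K1 K2). intros i k Hi Hk.
  pose proof (HL1 i k). pose proof (HK1 i ltac:(lia)). pose proof (HK1 k ltac:(lia)).
  pose proof (HK2 (t i) (t k)) as Hc.
  destruct (Ht i), (Ht k). specialize (Hc ltac:(lia) ltac:(lia)).
  pose proof (dist_sq_le_L1 X HX _ _ _ _ (proj1 (Hpp i)) (proj1 (Hpp k)) ltac:(lra)).
  unfold w. lra.
Qed.

Lemma cell_cauchy_near_cauchy n v : cauchy (cell_dist n) v ->
  exists t w, (forall i, (i <= t i)%nat) /\ cauchy d w /\
    forall i, cell_dist n (v (t i)) (w i) <= third_pow i.
Proof.
  intro Hv.
  destruct (classic (exists delta, 0 < delta /\
              exists J, forall j, (J <= j)%nat -> delta <= boundary_dist X (v j)))
    as [(delta & Hdelta & J & HJ) | Hno].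
  - exists (fun i => i), v. split; [auto | split; [eapply cauchy_off_boundary; eauto|]].
    intro i. unfold cell_dist. rewrite qdist_eqcl by (auto; apply rst_refl).
    pose proof (third_pow_pos i). lra.
  - apply near_boundary_subseq; auto. intro i. apply NNPP. intro Hi. apply Hno.
    exists (third_pow i). split; [apply third_pow_pos|]. exists i. intros j Hj.
    apply Rnot_lt_le. intro Hlt. apply Hi. exists j. auto.
Qed.

Lemma Ntens_complete : complete X -> complete (Ntens X).
Proof.
  intros HC c Hc.
  pose proof (Ntens_SquaMS X HX) as HNX.
  destruct (pigeonhole_N (fun k => fst (rep (c k)))) as [n Hn].
  destruct (choice (fun j k => (j <= k)%nat /\ fst (rep (c k)) = n) Hn) as [s Hs].
  set (v := fun j => snd (rep (c (s j)))).
  assert (Hrep : forall j, rep (c (s j)) = (n, v j)).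
  { intro j. destruct (Hs j) as [_ E]. rewrite <- E. apply surjective_pairing. }
  assert (Hv : cauchy (cell_dist n) v).
  { intros eps Heps. destruct (Hc eps Heps) as [K HK]. exists K. intros i j Hi Hj.
    unfold cell_dist. rewrite <- !Hrep. apply HK; [specialize (Hs i) | specialize (Hs j)]; lia. }
  destruct (cell_cauchy_near_cauchy n v Hv) as (t & w & Ht & Hw & Hvw).
  destruct (HC w Hw) as [x Hx].
  exists (cls (gen X) (n, x)).
  apply (cauchy_subseq_converges _ (sq_tri _ HNX) c (fun i => s (t i))); auto.
  { intro i. specialize (Ht i). specialize (Hs (t i)). lia. }
  intros eps Heps.
  destruct (third_pow_small (eps / 2) ltac:(lra)) as [K1 HK1].
  destruct (Hx (eps / 2) ltac:(lra)) as [K2 HK2].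
  exists (max K1 K2). intros i Hi.
  rewrite <- (cls_rep _ (c (s (t i)))), Ntens_dist_cls, Hrep by auto.
  pose proof (qdist_tri X HX (n, v (t i)) (n, w i) (n, x)).
  pose proof (qdist_same_cell X HX n (w i) x). pose proof (dist_nonneg X HX (w i) x).
  pose proof (Hvw i). pose proof (HK1 i ltac:(lia)). pose proof (HK2 i ltac:(lia)).
  unfold cell_dist in *. lra.
Qed.

End NtensComplete.

(** * The map theta *)

Definition eventually_small (f : nat -> R) : Prop :=
  forall eps, 0 < eps -> exists N, forall k, (N <= k)%nat -> f k < eps.

Section Theta.
Context (W : SqRaw) (HW : isSquaMS W) (lam : car (Ntens W) -> car W)
  (Hlam : is_morph (Ntens W) W lam).
Notation V := (Compl W HW).
Notation d := (dist W).
Notation th := (theta W HW lam).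
Let HV := Compl_SquaMS W HW.

Lemma cls_crel_small (u u' : CS W) : cls (crel W) u = cls (crel W) u' ->
  eventually_small (fun k => d (proj1_sig u k) (proj1_sig u' k)).
Proof.
  intros H eps Heps. apply cls_inj, (seq_dist_eqcl W HW) in H.
  destruct (seq_dist_near W HW u u' eps Heps) as [N HN]. exists N. intros k Hk.
  specialize (HN k Hk). rewrite H in HN. lra_abs.
Qed.

Lemma qdist_lift_eqcl_small a b : eqcl (gen V) a b ->
  forall u u' : CS W, cls (crel W) u = snd a -> cls (crel W) u' = snd b ->
  eventually_small (fun k => qdist W (fst a, proj1_sig u k) (fst b, proj1_sig u' k)).
Proof.
  induction 1 as [a b Hg | a | a b _ IH | a b c _ IH1 _ IH2]; intros u u' Hu Hu'.
  - destruct Hg as (m & m' & r & s & r' & s' & H1 & H2 & H3 & H4 & H5 & -> & ->). simpl in *.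
    intros eps Heps.
    destruct (cls_crel_small u (const_seq W HW (sq W r s)) Hu eps Heps) as [N1 HN1].
    destruct (cls_crel_small u' (const_seq W HW (sq W r' s')) Hu' eps Heps) as [N2 HN2].
    exists (max N1 N2). intros k Hk. specialize (HN1 k ltac:(lia)). specialize (HN2 k ltac:(lia)).
    simpl in HN1, HN2.
    assert (Hglue : qdist W (m, sq W r s) (m', sq W r' s') = 0).
    { apply qdist_eqcl, rst_step; auto. exists m, m', r, s, r', s'. tauto. }
    pose proof (qdist_tri W HW (m, proj1_sig u k) (m, sq W r s) (m', proj1_sig u' k)).
    pose proof (qdist_tri W HW (m, sq W r s) (m', sq W r' s') (m', proj1_sig u' k)).
    pose proof (qdist_same_cell W HW m (proj1_sig u k) (sq W r s)).
    pose proof (qdist_same_cell W HW m' (sq W r' s') (proj1_sig u' k)) as Hc.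
    rewrite (sq_sym W HW (sq W r' s')) in Hc. lra.
  - rewrite <- Hu' in Hu. intros eps Heps.
    destruct (cls_crel_small u u' Hu eps Heps) as [N HN]. exists N. intros k Hk.
    specialize (HN k Hk).
    pose proof (qdist_same_cell W HW (fst a) (proj1_sig u k) (proj1_sig u' k)).
    pose proof (dist_nonneg W HW (proj1_sig u k) (proj1_sig u' k)). lra.
  - intros eps Heps. destruct (IH u' u Hu' Hu eps Heps) as [N HN]. exists N. intros k Hk.
    rewrite qdist_sym by auto. auto.
  - intros eps Heps.
    destruct (IH1 u (rep (snd b)) Hu (cls_rep _ _) (eps / 2) ltac:(lra)) as [N1 HN1].
    destruct (IH2 (rep (snd b)) u' (cls_rep _ _) Hu' (eps / 2) ltac:(lra)) as [N2 HN2].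
    exists (max N1 N2). intros k Hk. specialize (HN1 k ltac:(lia)). specialize (HN2 k ltac:(lia)).
    pose proof (qdist_tri W HW (fst a, proj1_sig u k) (fst b, proj1_sig (rep (snd b)) k)
      (fst c, proj1_sig u' k)). lra.
Qed.

Lemma lam_dist_le_qdist a b : d (lam (cls (gen W) a)) (lam (cls (gen W) b)) <= qdist W a b.
Proof. rewrite <- (Ntens_dist_cls W HW). apply (proj1 Hlam). Qed.

Lemma lam_seq_cauchy n (u : CS W) : cauchy d (fun k => lam (cls (gen W) (n, proj1_sig u k))).
Proof.
  intros eps Heps. destruct (proj2_sig u eps Heps) as [N HN]. exists N. intros i j Hi Hj.
  specialize (HN i j Hi Hj).
  pose proof (lam_dist_le_qdist (n, proj1_sig u i) (n, proj1_sig u j)).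
  pose proof (qdist_same_cell W HW n (proj1_sig u i) (proj1_sig u j)).
  pose proof (dist_nonneg W HW (proj1_sig u i) (proj1_sig u j)). lra.
Qed.

Definition lam_class (n : N) (u : CS W) : car V :=
  cls (crel W) (exist _ _ (lam_seq_cauchy n u)).

Lemma theta_lam_class c : th c = lam_class (fst (rep c)) (rep (snd (rep c))).
Proof. apply mkC_cls. Qed.

Lemma theta_cls n (u : CS W) : th (cls (gen V) (n, cls (crel W) u)) = lam_class n u.
Proof.
  rewrite theta_lam_class. set (a := rep (cls (gen V) (n, cls (crel W) u))).
  apply cls_eq, rst_step, (crel_iff W HW).
  apply Rle_antisym; [|apply seq_dist_nonneg; auto].
  apply seq_dist_le; auto. intros eps Heps.
  destruct (qdist_lift_eqcl_small a _ (rep_cls _ _) (rep (snd a)) u (cls_rep _ _) eq_refl eps Heps)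
    as [N HN].
  exists N. intros k Hk. specialize (HN k Hk).
  eapply Rle_trans; [apply lam_dist_le_qdist | rewrite Rplus_0_l; left; exact HN].
Qed.

Lemma theta_embed n x : th (cls (gen V) (n, embed W HW x)) = embed W HW (lam (cls (gen W) (n, x))).
Proof.
  unfold embed at 1. rewrite theta_cls. apply cls_eq, rst_step, (crel_iff W HW).
  apply Rle_antisym; [|apply seq_dist_nonneg; auto]. apply seq_dist_le; auto.
  intros. exists 0%nat. intros. simpl. rewrite dist_refl by auto. lra.
Qed.

Lemma theta_sq r s : inM0 r s -> th (sq (Ntens V) r s) = sq V r s.
Proof.
  intro H. change (sq V r s) with (embed W HW (sq W r s)).
  change (sq (Ntens V) r s) with (cls (gen V) ((ncoord r, ncoord s),
    embed W HW (sq W (3 * r - toR (ncoord r)) (3 * s - toR (ncoord s))))).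
  rewrite theta_embed. f_equal. exact (proj2 Hlam r s H).
Qed.

Lemma qdist_lift_chain_le l : forall a b (u u' : CS W), chain_ok V a b l ->
  cls (crel W) u = snd a -> cls (crel W) u' = snd b ->
  forall eps, 0 < eps -> exists N, forall k, (N <= k)%nat ->
  qdist W (fst a, proj1_sig u k) (fst b, proj1_sig u' k) <= chain_cost V l + eps.
Proof.
  induction l as [|[x y] l IH]; cbn [chain_ok chain_cost];
    intros a b u u' Hl Hu Hu' eps Heps.
  - destruct (qdist_lift_eqcl_small a b Hl u u' Hu Hu' eps Heps) as [N HN]. exists N.
    intros k Hk. specialize (HN k Hk). lra.
  - destruct Hl as [Hax Hyb].
    set (ux := rep (snd x)). set (uy := rep (snd y)).
    destruct (qdist_lift_eqcl_small a x Hax u ux Hu (cls_rep _ _) (eps / 3) ltac:(lra)) as [N1 HN1].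
    destruct (IH y b uy u' Hyb (cls_rep _ _) Hu' (eps / 3) ltac:(lra)) as [N2 HN2].
    destruct (seq_dist_near W HW ux uy (eps / 3) ltac:(lra)) as [N3 HN3].
    exists (max N1 (max N2 N3)). intros k Hk.
    specialize (HN1 k ltac:(lia)). specialize (HN2 k ltac:(lia)). specialize (HN3 k ltac:(lia)).
    pose proof (qdist_tri W HW (fst a, proj1_sig u k) (fst x, proj1_sig ux k)
                               (fst b, proj1_sig u' k)).
    pose proof (qdist_tri W HW (fst x, proj1_sig ux k) (fst y, proj1_sig uy k)
                               (fst b, proj1_sig u' k)).
    pose proof (qdist_le_d0 W HW (fst x, proj1_sig ux k) (fst y, proj1_sig uy k)).
    assert (d0 W (fst x, proj1_sig ux k) (fst y, proj1_sig uy k) <= d0 V x y + eps / 3).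
    { unfold d0. cbn [fst snd]. destruct N_eq_dec; [|lra].
      change (dist V (snd x) (snd y)) with (seq_dist W ux uy). lra_abs. }
    lra.
Qed.

Lemma theta_dist_le c c' : dist V (th c) (th c') <= dist (Ntens V) c c'.
Proof.
  rewrite !theta_lam_class. unfold lam_class. rewrite Compl_dist_cls.
  set (a := rep c). set (b := rep c').
  apply Rle_plus_epsilon. intros eps Heps.
  destruct (qdist_approx V HV a b (eps / 2) ltac:(lra)) as [l [Hl Hc]].
  apply Rle_trans with (chain_cost V l + eps / 2).
  2: { change (dist (Ntens V) c c') with (qdist V a b). lra. }
  apply seq_dist_le; auto. intros e He.
  destruct (qdist_lift_chain_le l a b _ _ Hl (cls_rep _ _) (cls_rep _ _) e He) as [N HN].
  exists N. intros k Hk. specialize (HN k Hk).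
  eapply Rle_trans; [apply lam_dist_le_qdist|]. eapply Rle_trans; [exact HN | lra].
Qed.

End Theta.

Section ThetaIso.
Context (W : SqRaw) (HW : isSquaMS W) (lam : car (Ntens W) -> car W)
  (Hlam : is_morph (Ntens W) W lam)
  (Hiso : forall a b, dist W (lam a) (lam b) = dist (Ntens W) a b).
Notation V := (Compl W HW).
Notation th := (theta W HW lam).
Let HV := Compl_SquaMS W HW.
Let HNV := Ntens_SquaMS V HV.

Lemma theta_dist_ge c c' : dist (Ntens V) c c' <= dist V (th c) (th c').
Proof.
  rewrite !(theta_lam_class W HW lam Hlam). unfold lam_class. rewrite Compl_dist_cls.
  set (a := rep c). set (b := rep c'). set (u := rep (snd a)). set (u' := rep (snd b)).
  change (dist (Ntens V) c c') with (qdist V a b).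
  apply Rle_plus_epsilon. intros eps Heps.
  destruct (seq_dist_near W HW (exist _ _ (lam_seq_cauchy W HW lam Hlam (fst a) u))
    (exist _ _ (lam_seq_cauchy W HW lam Hlam (fst b) u')) (eps / 3) ltac:(lra)) as [N1 HN1].
  destruct (Compl_dist_embed_near W HW u (eps / 3) ltac:(lra)) as [N2 HN2].
  destruct (Compl_dist_embed_near W HW u' (eps / 3) ltac:(lra)) as [N3 HN3].
  set (k := max N1 (max N2 N3)).
  specialize (HN1 k ltac:(lia)). specialize (HN2 k ltac:(lia)). specialize (HN3 k ltac:(lia)).
  cbn [proj1_sig] in HN1. rewrite Hiso, Ntens_dist_cls in HN1 by auto.
  unfold u, u' in HN2, HN3. rewrite cls_rep in HN2, HN3. fold u u' in HN2, HN3.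
  set (a' := (fst a, embed W HW (proj1_sig u k))). set (b' := (fst b, embed W HW (proj1_sig u' k))).
  pose proof (qdist_tri V HV a a' b). pose proof (qdist_tri V HV a' b' b).
  pose proof (qdist_map W V HW HV (embed W HW) (embed_morph W HW)
    (fst a, proj1_sig u k) (fst b, proj1_sig u' k)) as Hmap.
  assert (Ha : qdist V a a' <= eps / 3).
  { unfold a'. rewrite (surjective_pairing a) at 1.
    pose proof (qdist_same_cell V HV (fst a) (snd a) (embed W HW (proj1_sig u k))). lra. }
  assert (Hb : qdist V b' b <= eps / 3).
  { unfold b'. rewrite (surjective_pairing b) at 2.
    pose proof (qdist_same_cell V HV (fst b) (embed W HW (proj1_sig u' k)) (snd b)) as Hc.
    rewrite (sq_sym V HV) in Hc. lra. }
  unfold Npre_map in Hmap. cbn [fst snd] in Hmap. fold a' b' in Hmap. lra_abs.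
Qed.

Lemma theta_isometry c c' : dist V (th c) (th c') = dist (Ntens V) c c'.
Proof. apply Rle_antisym; [apply theta_dist_le | apply theta_dist_ge]; auto. Qed.

Lemma theta_inj c c' : th c = th c' -> c = c'.
Proof.
  intro H. apply (sq_zero _ HNV). rewrite <- theta_isometry, H. apply (sq_zero _ HV). reflexivity.
Qed.

Context (g : car W -> car (Ntens W)) (Hlg : forall x, lam (g x) = x).

Lemma theta_Ntens_map_embed x : th (Ntens_map W V (embed W HW) (g x)) = embed W HW x.
Proof.
  rewrite <- (cls_rep _ (g x)), (Ntens_map_cls W V (embed W HW) (embed_morph W HW)).
  unfold Npre_map. rewrite (theta_embed W HW lam Hlam). rewrite <- surjective_pairing, cls_rep, Hlg.
  reflexivity.
Qed.

(* Approximate v by embedded points and pull them back through [g]; since [theta] is an isometry,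
   the preimages are Cauchy in the complete space N (x) C(W). *)
Lemma theta_surj v : exists c, th c = v.
Proof.
  set (w := fun k => proj1_sig (rep v) k).
  set (ck := fun k => Ntens_map W V (embed W HW) (g (w k))).
  assert (Hc : cauchy (dist (Ntens V)) ck).
  { intros eps Heps. destruct (proj2_sig (rep v) eps Heps) as [N HN]. exists N. intros i j Hi Hj.
    unfold ck. rewrite <- theta_isometry, !theta_Ntens_map_embed, Compl_dist_embed.
    apply HN; auto. }
  destruct (Ntens_complete V HV (Compl_complete W HW) ck Hc) as [c Hcl].
  exists c. apply (sq_zero _ HV). apply Rle_antisym; [|apply dist_nonneg; auto].
  apply Rle_plus_epsilon. intros eps Heps.
  destruct (Hcl (eps / 2) ltac:(lra)) as [N1 H1].
  destruct (Compl_dist_embed_rep_near W HW v (eps / 2) ltac:(lra)) as [N2 H2].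
  set (k := max N1 N2). specialize (H1 k ltac:(lia)). specialize (H2 k ltac:(lia)).
  pose proof (sq_tri V HV (th c) (th (ck k)) v) as Htri.
  rewrite theta_isometry in Htri. unfold ck in Htri. rewrite theta_Ntens_map_embed in Htri.
  rewrite (sq_sym V HV (embed W HW (w k)) v) in Htri.
  rewrite (sq_sym _ HNV) in H1. unfold ck, w in *. lra.
Qed.

Lemma theta_inverse : exists thinv : car V -> car (Ntens V),
  (forall v, th (thinv v) = v) /\ (forall c, thinv (th c) = c) /\
  is_morph V (Ntens V) thinv.
Proof.
  destruct (choice _ theta_surj) as [thinv Hth].
  exists thinv. split; [exact Hth | split].
  - intro c. apply theta_inj. apply Hth.
  - split.
    + intros v v'. rewrite <- theta_isometry, !Hth. lra.
    + intros r s H. apply theta_inj. rewrite Hth, (theta_sq W HW lam Hlam); auto.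
Qed.

End ThetaIso.

(** * A short map from the unit square into C(W) *)

Lemma toR_inj a b : toR a = toR b -> a = b.
Proof. destruct a, b; simpl; intro; try lra; reflexivity. Qed.

Fixpoint triadic (j : nat) (x : R) : Prop :=
  match j with
  | O => x = 0 \/ x = 1
  | S j' => exists t : three, triadic j' (3 * x - toR t)
  end.

Lemma triadic_range j x : triadic j x -> 0 <= x <= 1.
Proof.
  revert x. induction j; simpl; intros x H; [destruct H; lra|].
  destruct H as [t Ht]. apply IHj in Ht. destruct t; simpl in *; lra.
Qed.

Lemma triadic_S j x : triadic j x -> triadic (S j) x.
Proof.
  revert x. induction j; intros x H.
  - destruct H as [-> | ->]; [exists I0 | exists I2]; simpl; lra.
  - destruct H as [t Ht]. exists t. apply IHj, Ht.
Qed.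

Lemma triadic_le j j' x : (j <= j')%nat -> triadic j x -> triadic j' x.
Proof. induction 1; auto. intro. apply triadic_S. auto. Qed.

Lemma triadic_01 j x : x = 0 \/ x = 1 -> triadic j x.
Proof. intro H. apply (triadic_le 0); [lia | exact H]. Qed.

Lemma triadic_dense j x : 0 <= x <= 1 -> exists a, triadic j a /\ Rabs (x - a) <= third_pow j.
Proof.
  revert x. induction j; intros x Hx.
  - exists 0. split; [left; reflexivity | rewrite third_pow_0; lra_abs].
  - pose proof (ncoord_range x Hx) as Hr.
    destruct (IHj (3 * x - toR (ncoord x)) Hr) as [a' [Ha' Hd]].
    exists ((a' + toR (ncoord x)) / 3). split.
    + exists (ncoord x). replace (3 * ((a' + toR (ncoord x)) / 3) - toR (ncoord x)) with a' by lra.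
      exact Ha'.
    + rewrite third_pow_S. lra_abs.
Qed.

Section SquareMap.
Context (W : SqRaw) (HW : isSquaMS W) (lam : car (Ntens W) -> car W)
  (Hlam : is_morph (Ntens W) W lam).
Notation d := (dist W).

Fixpoint level_map (j : nat) (x y : R) : car W :=
  match j with
  | O => sq W x y
  | S j' => lam (cls (gen W) ((ncoord x, ncoord y),
                  level_map j' (3 * x - toR (ncoord x)) (3 * y - toR (ncoord y))))
  end.

Lemma level_map_M0 j x y : inM0 x y -> level_map j x y = sq W x y.
Proof.
  revert x y. induction j; intros x y H; simpl; auto.
  rewrite IHj by (apply ncoord_M0; auto). exact (proj2 Hlam x y H).
Qed.

Lemma other_cell_boundary (t : three) x : 0 <= 3 * x - toR t <= 1 -> 0 <= x <= 1 ->
  t <> ncoord x ->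
  (3 * x - toR t = 0 \/ 3 * x - toR t = 1) /\
  (3 * x - toR (ncoord x) = 0 \/ 3 * x - toR (ncoord x) = 1).
Proof.
  intros H1 Hx Hne. pose proof (ncoord_range x Hx).
  assert (toR t <> toR (ncoord x)) by (intro E; apply Hne, toR_inj, E).
  destruct t, (ncoord x); simpl in *; try congruence; split; lra.
Qed.

(* Two cells containing the point meet along S(M0), where [~] identifies the choices. *)
Lemma level_map_cell j x y (n : N) : 0 <= x <= 1 -> 0 <= y <= 1 ->
  0 <= 3 * x - toR (fst n) <= 1 -> 0 <= 3 * y - toR (snd n) <= 1 ->
  level_map (S j) x y =
  lam (cls (gen W) (n, level_map j (3 * x - toR (fst n)) (3 * y - toR (snd n)))).
Proof.
  intros Hx Hy H1 H2. simpl. destruct n as [n1 n2]. simpl in *.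
  destruct (N_eq_dec (n1, n2) (ncoord x, ncoord y)) as [E|E]; [inversion E; reflexivity|].
  pose proof (ncoord_range x Hx). pose proof (ncoord_range y Hy).
  assert (HM : inM0 (3 * x - toR n1) (3 * y - toR n2) /\
               inM0 (3 * x - toR (ncoord x)) (3 * y - toR (ncoord y))).
  { destruct (classic (n1 = ncoord x)) as [e1|e1].
    - assert (e2 : n2 <> ncoord y) by (intro; apply E; subst; reflexivity).
      destruct (other_cell_boundary n2 y H2 Hy e2) as [[A|A] [B|B]]; subst;
        (split; split; [lra | split; [lra | solve_M0] | lra | split; [lra | solve_M0]]).
    - destruct (other_cell_boundary n1 x H1 Hx e1) as [[A|A] [B|B]];
        (split; split; [lra | split; [lra | solve_M0] | lra | split; [lra | solve_M0]]). }
  destruct HM as [M1 M2].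
  rewrite !level_map_M0 by auto. f_equal. apply cls_eq, eqcl_glue; auto; simpl; lra.
Qed.

Lemma lam_dist_same_cell n a b :
  d (lam (cls (gen W) (n, a))) (lam (cls (gen W) (n, b))) <= d a b / 3.
Proof.
  eapply Rle_trans; [apply (lam_dist_le_qdist W HW lam Hlam) | apply qdist_same_cell; auto].
Qed.

Lemma level_map_vertical j a y y' : triadic j a -> 0 <= y <= 1 -> 0 <= y' <= 1 ->
  d (level_map j a y) (level_map j a y') <= Rabs (y - y').
Proof.
  revert a y y'. induction j; intros a y y' Ha Hy Hy'.
  - simpl. rewrite (proj1 (sq1 W HW a y y' Ha Hy Hy')). lra_abs.
  - destruct Ha as [t Ht]. pose proof (triadic_range _ _ Ht).
    assert (Ha : 0 <= a <= 1) by (destruct t; simpl in *; lra).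
    apply (le_abs_of_thirds (fun y y' => d (level_map (S j) a y) (level_map (S j) a y'))); auto;
      [intros; apply (sq_tri W HW)|].
    intros r z z' Hz Hz'. pose proof (toR_range r).
    rewrite (level_map_cell j a z (t, r)), (level_map_cell j a z' (t, r)); simpl; try lra.
    eapply Rle_trans; [apply lam_dist_same_cell|].
    specialize (IHj (3 * a - toR t) (3 * z - toR r) (3 * z' - toR r) Ht ltac:(lra) ltac:(lra)).
    lra_abs.
Qed.

Lemma level_map_horizontal j b x x' : triadic j b -> 0 <= x <= 1 -> 0 <= x' <= 1 ->
  d (level_map j x b) (level_map j x' b) <= Rabs (x - x').
Proof.
  revert b x x'. induction j; intros b x x' Hb Hx Hx'.
  - simpl. rewrite (proj2 (sq1 W HW b x x' Hb Hx Hx')). lra_abs.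
  - destruct Hb as [t Ht]. pose proof (triadic_range _ _ Ht).
    assert (Hb : 0 <= b <= 1) by (destruct t; simpl in *; lra).
    apply (le_abs_of_thirds (fun x x' => d (level_map (S j) x b) (level_map (S j) x' b))); auto;
      [intros; apply (sq_tri W HW)|].
    intros r z z' Hz Hz'. pose proof (toR_range r).
    rewrite (level_map_cell j z b (r, t)), (level_map_cell j z' b (r, t)); simpl; try lra.
    eapply Rle_trans; [apply lam_dist_same_cell|].
    specialize (IHj (3 * b - toR t) (3 * z - toR r) (3 * z' - toR r) Ht ltac:(lra) ltac:(lra)).
    lra_abs.
Qed.

Lemma level_map_S j a y : triadic j a -> 0 <= y <= 1 -> level_map (S j) a y = level_map j a y.
Proof.
  revert a y. induction j; intros a y Ha Hy.
  - rewrite !level_map_M0; auto; destruct Ha as [-> | ->]; split; try lra; split; try lra; solve_M0.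
  - destruct Ha as [t Ht]. pose proof (triadic_range _ _ Ht).
    assert (Ha : 0 <= a <= 1) by (destruct t; simpl in *; lra).
    pose proof (ncoord_range y Hy).
    rewrite (level_map_cell (S j) a y (t, ncoord y)) by (simpl; auto). cbn [fst snd].
    rewrite (IHj (3 * a - toR t) (3 * y - toR (ncoord y))); auto.
    rewrite (level_map_cell j a y (t, ncoord y)) by (simpl; auto). reflexivity.
Qed.

Lemma level_map_le j j' a y : (j <= j')%nat -> triadic j a -> 0 <= y <= 1 ->
  level_map j' a y = level_map j a y.
Proof.
  induction 1; intros Ha Hy; auto. rewrite level_map_S; auto. apply (triadic_le j); auto.
Qed.

Lemma level_map_near j a b y y' : triadic j a -> triadic j b -> 0 <= y <= 1 -> 0 <= y' <= 1 ->
  d (level_map j a y) (level_map j b y') <= Rabs (a - b) + Rabs (y - y') + 2 * third_pow j.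
Proof.
  intros Ha Hb Hy Hy'. destruct (triadic_dense j y Hy) as [c [Hc Hyc]].
  pose proof (triadic_range _ _ Hc) as Rc. pose proof (triadic_range _ _ Ha) as Ra.
  pose proof (triadic_range _ _ Hb) as Rb.
  pose proof (level_map_vertical j a y c Ha Hy Rc).
  pose proof (level_map_horizontal j c a b Hc Ra Rb).
  pose proof (level_map_vertical j b c y' Hb Rc Hy').
  pose proof (sq_tri W HW (level_map j a y) (level_map j a c) (level_map j b y')).
  pose proof (sq_tri W HW (level_map j a c) (level_map j b c) (level_map j b y')).
  lra_abs.
Qed.

Definition triadic_approx (x : R) (j : nat) : R :=
  proj1_sig (constructive_indefinite_description _ (triadic_dense j (clamp x) (clamp_range x))).

Lemma triadic_approx_spec x j :
  triadic j (triadic_approx x j) /\ Rabs (clamp x - triadic_approx x j) <= third_pow j.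
Proof. unfold triadic_approx. destruct constructive_indefinite_description. simpl. auto. Qed.

(* [level_map j] is short along the level-j triadic vertical and horizontal lines, and the level
   maps agree on those lines, so sampling at triadic approximations gives Cauchy sequences. *)
Definition square_seq (x y : R) (j : nat) : car W := level_map j (triadic_approx x j) (clamp y).

Lemma square_seq_near x y j j' : (j <= j')%nat ->
  d (square_seq x y j) (square_seq x y j') <= 4 * third_pow j.
Proof.
  intro Hj. unfold square_seq.
  destruct (triadic_approx_spec x j) as [A1 A2]. destruct (triadic_approx_spec x j') as [B1 B2].
  rewrite <- (level_map_le j j' _ (clamp y) Hj A1 (clamp_range y)).
  pose proof (level_map_near j' _ _ (clamp y) (clamp y) (triadic_le j j' _ Hj A1) B1
    (clamp_range y) (clamp_range y)).
  pose proof (third_pow_le j j' Hj). rewrite Rminus_diag, Rabs_R0 in H. lra_abs.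
Qed.

Lemma square_seq_cauchy x y : cauchy d (square_seq x y).
Proof. apply (cauchy_of_geometric_rate _ (sq_sym W HW) _ 4), square_seq_near. Qed.

Definition square_map (x y : R) : car (Compl W HW) :=
  cls (crel W) (exist _ _ (square_seq_cauchy x y)).

Lemma square_map_short x y x' y' : 0 <= x <= 1 -> 0 <= y <= 1 -> 0 <= x' <= 1 -> 0 <= y' <= 1 ->
  dist (Compl W HW) (square_map x y) (square_map x' y') <= Rabs (x - x') + Rabs (y - y').
Proof.
  intros Hx Hy Hx' Hy'. unfold square_map. rewrite Compl_dist_cls. apply seq_dist_le; auto.
  intros eps Heps. destruct (third_pow_small (eps / 4) ltac:(lra)) as [K HK]. exists K.
  intros k Hk. simpl. unfold square_seq.
  destruct (triadic_approx_spec x k) as [A1 A2]. destruct (triadic_approx_spec x' k) as [B1 B2].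
  pose proof (level_map_near k _ _ (clamp y) (clamp y') A1 B1 (clamp_range y) (clamp_range y')).
  rewrite !clamp_id in * by auto. specialize (HK k Hk). lra_abs.
Qed.

Lemma square_map_M0 x y : inM0 x y -> square_map x y = sq (Compl W HW) x y.
Proof.
  intro H. unfold square_map. apply cls_eq, rst_step, (crel_iff W HW).
  apply Rle_antisym; [|apply seq_dist_nonneg; auto].
  apply seq_dist_le; auto. intros eps Heps.
  destruct (third_pow_small (eps / 4) ltac:(lra)) as [K HK].
  exists K. intros k Hk. simpl. unfold square_seq. destruct H as (Hx & Hy & Hs).
  rewrite !clamp_id by auto. destruct (triadic_approx_spec x k) as [A1 A2].
  rewrite clamp_id in A2 by auto.
  rewrite <- (level_map_M0 k x y) by (split; auto).
  specialize (HK k Hk).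
  destruct Hs as [E | [E | [E | E]]].
  - pose proof (level_map_near k _ x y y A1 (triadic_01 k x (or_introl E)) Hy Hy).
    rewrite Rminus_diag, Rabs_R0 in H. lra_abs.
  - pose proof (level_map_near k _ x y y A1 (triadic_01 k x (or_intror E)) Hy Hy).
    rewrite Rminus_diag, Rabs_R0 in H. lra_abs.
  - pose proof (level_map_horizontal k y _ x (triadic_01 k y (or_introl E))
                                               (triadic_range _ _ A1) Hx).
    lra_abs.
  - pose proof (level_map_horizontal k y _ x (triadic_01 k y (or_intror E))
                                               (triadic_range _ _ A1) Hx).
    lra_abs.
Qed.

End SquareMap.

(** * Finality *)

Section Finality.
Context (W : SqRaw) (HW : isSquaMS W) (lam : car (Ntens W) -> car W)
  (Hlam : is_morph (Ntens W) W lam)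
  (Hiso : forall a b, dist W (lam a) (lam b) = dist (Ntens W) a b)
  (thinv : car (Compl W HW) -> car (Ntens (Compl W HW)))
  (Hth1 : forall v, theta W HW lam (thinv v) = v)
  (Hth2 : forall c, thinv (theta W HW lam c) = c)
  (Y : SqRaw) (HY : isSquaMS Y) (gam : car Y -> car (Ntens Y)) (Hgam : is_morph Y (Ntens Y) gam).
Notation V := (Compl W HW).
Notation th := (theta W HW lam).
Let HV := Compl_SquaMS W HW.

Definition coalg_step (h : car Y -> car V) (y : car Y) : car V := th (Ntens_map Y V h (gam y)).

Lemma coalg_step_morph h : is_morph Y V h -> is_morph Y V (coalg_step h).
Proof.
  intro Hh. split.
  - intros y y'. unfold coalg_step. rewrite (theta_isometry W HW lam Hlam Hiso).
    pose proof (proj1 (Ntens_map_morph Y V HY HV h Hh) (gam y) (gam y')).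
    pose proof (proj1 Hgam y y'). lra.
  - intros r s H. unfold coalg_step. rewrite (proj2 Hgam r s H).
    rewrite (proj2 (Ntens_map_morph Y V HY HV h Hh) r s H). apply (theta_sq W HW lam Hlam), H.
Qed.

Lemma coalg_step_contract h h' B : (forall y, dist V (h y) (h' y) <= B) ->
  forall y, dist V (coalg_step h y) (coalg_step h' y) <= B / 3.
Proof.
  intros H y. unfold coalg_step. rewrite (theta_isometry W HW lam Hlam Hiso).
  eapply Rle_trans; [apply Ntens_map_contract; auto|]. specialize (H (snd (rep (gam y)))). lra.
Qed.

Lemma coalg_morph_fixpoint h :
  (forall y, thinv (h y) = Ntens_map Y V h (gam y)) <-> forall y, coalg_step h y = h y.
Proof.
  split; intros H y; unfold coalg_step in *.
  - rewrite <- H. apply Hth1.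
  - rewrite <- H at 1. apply Hth2.
Qed.

Lemma coalg_fixpoint_unique h h' :
  (forall y, coalg_step h y = h y) -> (forall y, coalg_step h' y = h' y) -> h = h'.
Proof.
  intros Hh Hh'. apply functional_extensionality. intro y.
  apply (sq_zero V HV). apply Rle_antisym; [|apply dist_nonneg; auto].
  apply (le0_of_le_third_pow _ 2). intro k. revert y. induction k; intro y.
  - rewrite third_pow_0. pose proof (sq_bound V HV (h y) (h' y)). lra.
  - rewrite <- (Hh y), <- (Hh' y), third_pow_S.
    eapply Rle_trans; [apply (coalg_step_contract h h' _ IHk) | lra].
Qed.

(* Any morphism Y -> V starts the iteration: the unit square maps into V, and Y retracts onto it. *)
Definition coalg_start (y : car Y) : car V :=
  square_map W HW lam Hlam (coord_x Y y) (coord_y Y y).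

Lemma coalg_start_morph : is_morph Y V coalg_start.
Proof.
  split.
  - intros y y'. unfold coalg_start. destruct (coord_range Y y), (coord_range Y y').
    eapply Rle_trans; [apply square_map_short; auto | apply coord_lipschitz; auto].
  - intros r s H. unfold coalg_start. destruct (coord_sq Y HY r s H) as [-> ->].
    apply square_map_M0, H.
Qed.

Definition coalg_iter (k : nat) : car Y -> car V := Nat.iter k coalg_step coalg_start.

Lemma coalg_iter_morph k : is_morph Y V (coalg_iter k).
Proof. induction k; [apply coalg_start_morph | apply coalg_step_morph, IHk]. Qed.

Lemma coalg_iter_step k y : dist V (coalg_iter (S k) y) (coalg_iter k y) <= 2 * third_pow k.
Proof.
  revert y. induction k as [|k IH]; intro y.
  - rewrite third_pow_0. pose proof (sq_bound V HV (coalg_iter 1 y) (coalg_iter 0 y)). lra.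
  - pose proof (coalg_step_contract (coalg_iter (S k)) (coalg_iter k) _ IH y) as H.
    rewrite third_pow_S. simpl in H |- *. lra.
Qed.

Lemma coalg_iter_dist k m y : (k <= m)%nat ->
  dist V (coalg_iter k y) (coalg_iter m y) <= 3 * third_pow k.
Proof.
  intro Hkm. cut (dist V (coalg_iter k y) (coalg_iter m y) <= 3 * third_pow k - 3 * third_pow m).
  { pose proof (third_pow_pos m). lra. }
  induction Hkm as [|m _ IH].
  - rewrite dist_refl by auto. lra.
  - pose proof (sq_tri V HV (coalg_iter k y) (coalg_iter m y) (coalg_iter (S m) y)).
    pose proof (coalg_iter_step m y) as Hs. rewrite (sq_sym V HV) in Hs. rewrite third_pow_S. lra.
Qed.

Lemma coalg_fixpoint_exists : exists h, is_morph Y V h /\ forall y, coalg_step h y = h y.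
Proof.
  assert (Hlim : forall y, exists l, forall k, dist V (coalg_iter k y) l <= 3 * third_pow k).
  { intro y. destruct (Compl_complete W HW (fun k => coalg_iter k y)) as [l Hl].
    - apply (cauchy_of_geometric_rate _ (sq_sym V HV) _ 3). intros. apply coalg_iter_dist; auto.
    - exists l.
      exact (converges_to_rate_le _ (sq_tri V HV) _ _ _ (fun k m => coalg_iter_dist k m y) Hl). }
  destruct (choice _ Hlim) as [h Hh].
  exists h. split; [split|].
  - intros y y'. cut (dist V (h y) (h y') - dist Y y y' <= 0); [lra|].
    apply (le0_of_le_third_pow _ 6). intro k.
    pose proof (sq_tri V HV (h y) (coalg_iter k y) (h y')).
    pose proof (sq_tri V HV (coalg_iter k y) (coalg_iter k y') (h y')).
    pose proof (Hh y k) as Hy. pose proof (Hh y' k). rewrite (sq_sym V HV) in Hy.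
    pose proof (proj1 (coalg_iter_morph k) y y'). lra.
  - intros r s H. apply (sq_zero V HV). apply Rle_antisym; [|apply dist_nonneg; auto].
    apply (le0_of_le_third_pow _ 3). intro k. pose proof (Hh (sq Y r s) k) as Hk.
    rewrite (proj2 (coalg_iter_morph k) r s H) in Hk. rewrite (sq_sym V HV). lra.
  - intro y. apply (sq_zero V HV). apply Rle_antisym; [|apply dist_nonneg; auto].
    apply (le0_of_le_third_pow _ 2). intro k.
    pose proof (sq_tri V HV (coalg_step h y) (coalg_iter (S k) y) (h y)).
    assert (A : forall z, dist V (h z) (coalg_iter k z) <= 3 * third_pow k).
    { intro z. rewrite (sq_sym V HV). apply Hh. }
    pose proof (coalg_step_contract h (coalg_iter k) _ A y) as Hc.
    pose proof (Hh y (S k)) as HS. rewrite third_pow_S in HS.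
    change (coalg_iter (S k) y) with (coalg_step (coalg_iter k) y) in *. lra.
Qed.

Lemma finality : exists! h : car Y -> car V,
  is_morph Y V h /\ forall y, thinv (h y) = Ntens_map Y V h (gam y).
Proof.
  destruct coalg_fixpoint_exists as (h & Hh & Hfix).
  exists h. split.
  - split; [exact Hh | apply coalg_morph_fixpoint, Hfix].
  - intros h' [_ Heq'].
    apply coalg_fixpoint_unique; [exact Hfix | apply coalg_morph_fixpoint, Heq'].
Qed.

End Finality.

Theorem mainTheorem8
  (W : SqRaw) (HW : isSquaMS W) (lam : car (Ntens W) -> car W)
  (Hlam : is_morph (Ntens W) W lam)
  (Hinit : forall Y : SqRaw, isSquaMS Y ->
     forall mu : car (Ntens Y) -> car Y, is_morph (Ntens Y) Y mu ->
     exists! g : car W -> car Y,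
       is_morph W Y g /\ forall c, g (lam c) = mu (Ntens_map W Y g c)) :
  isSquaMS (Compl W HW) /\
  exists thinv : car (Compl W HW) -> car (Ntens (Compl W HW)),
    (forall v, theta W HW lam (thinv v) = v) /\
    (forall c, thinv (theta W HW lam c) = c) /\
    is_morph (Compl W HW) (Ntens (Compl W HW)) thinv /\
    (forall Y : SqRaw, isSquaMS Y ->
       forall gam : car Y -> car (Ntens Y), is_morph Y (Ntens Y) gam ->
       exists! h : car Y -> car (Compl W HW),
         is_morph Y (Compl W HW) h /\
         forall y, thinv (h y) = Ntens_map Y (Compl W HW) h (gam y)).
Proof.
  split; [apply Compl_SquaMS|].
  destruct (lambek W HW lam Hlam Hinit) as (g & Hg & Hlg & Hgl).
  pose proof (morph_inverse_isometry _ _ lam g Hlam Hg Hgl) as Hiso.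
  destruct (theta_inverse W HW lam Hlam Hiso g Hlg) as (thinv & Hth1 & Hth2 & Hthm).
  exists thinv. split; [exact Hth1 | split; [exact Hth2 | split; [exact Hthm |]]].
  intros Y HY gam Hgam. exact (finality W HW lam Hlam Hiso thinv Hth1 Hth2 Y HY gam Hgam).
Qed.
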